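(* Let $\lambda>0$, $p\in\mathbb{N}$, and let $\omega=\left[0,\frac{1}{2\sqrt\lambda}\right]\times\left[-\frac{1}{4\sqrt\lambda},\frac{1}{4\sqrt\lambda}\right]$ with coordinates $(x_1,x_2)$. Let $f\in C^{p+1}(\omega)$ be complex-valued with $f(0,x_2)=0$ for each $x_2$, and suppose that for some $\beta_p,\beta_{p+1}>0$, $$\left\|\frac{\partial^{p+1}f}{\partial x_1^{p+1}}\right\|_{L^2(\omega)}\le\beta_{p+1}\lambda^{1+\frac p2},\qquad \left\|\frac{\partial^{p}f}{\partial x_1^{p}}\right\|_{L^2(\omega)}\le\beta_{p}\lambda^{\frac12+\frac p2}.$$ Then for all $\xi_1,\xi_2,\varphi\in\mathbb{R}$, $$\left\|f-e^{i(\xi_1x_1+\xi_2x_2+\varphi)}\right\|_{L^2(\omega)}^2\ \ge\ \frac1{36}\min\left\{4^{-p-\frac52}\lambda^{-1},\ 4^{-\frac p2-\frac32}\,6^{\frac1{2p}}\,(\beta_{p+1}^2+\beta_p^2)^{-\frac1{2p}}\,\lambda^{-1-\frac1p}\right\}.$$ *)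

From Stdlib Require Import Reals List.
From Coquelicot Require Import Coquelicot.
Open Scope R_scope.

Definition expi (theta : R) : C := (cos theta, sin theta).

(* Iterated partial derivatives of a real function of two variables:
   [true] = d/dx1, [false] = d/dx2; the head of the list is applied last. *)
Fixpoint pderiv (ds : list bool) (g : R -> R -> R) : R -> R -> R :=
  match ds with
  | nil => g
  | b :: ds' =>
      let h := pderiv ds' g in
      if b then (fun x1 x2 => Derive (fun t => h t x2) x1)
      else (fun x1 x2 => Derive (fun t => h x1 t) x2)
  end.

Definition Ck_R2 (k : nat) (g : R -> R -> R) : Prop :=
  (forall ds, (length ds < k)%nat -> forall x1 x2,
      ex_derive (fun t => pderiv ds g t x2) x1 /\
      ex_derive (fun t => pderiv ds g x1 t) x2) /\
  (forall ds, (length ds <= k)%nat -> forall z : R * R,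
      continuous (fun w : R * R => pderiv ds g (fst w) (snd w)) z).

Definition Ck_R2_C (k : nat) (F : R -> R -> C) : Prop :=
  Ck_R2 k (fun x1 x2 => Re (F x1 x2)) /\ Ck_R2 k (fun x1 x2 => Im (F x1 x2)).

Definition dx1_n (k : nat) (F : R -> R -> C) : R -> R -> C :=
  fun x1 x2 => (Derive_n (fun t => Re (F t x2)) k x1,
                Derive_n (fun t => Im (F t x2)) k x1).

Definition in_rect (a b c d x1 x2 : R) : Prop := a <= x1 <= b /\ c <= x2 <= d.

Definition L2sq_rect (a b c d : R) (F : R -> R -> C) : R :=
  RInt (fun x1 => RInt (fun x2 => (Cmod (F x1 x2))^2) c d) a b.

Definition L2_rect (a b c d : R) (F : R -> R -> C) : R :=
  sqrt (L2sq_rect a b c d F).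

(* Write F = u + i v. For each x2 the slice x1 |-> u(x1, x2) vanishes at 0, so Taylor's formula
   of order p - 1 at 0 writes u(y) = y Q(y) + R(y), with Q a polynomial of degree < p - 1 and R
   controlled, via a one-dimensional Sobolev bound, by the L^2 norms of the p-th and (p+1)-st
   x1-derivatives. Since the (p-1)-st finite difference of Q vanishes, Q(a) is a combination of the
   values Q(a + j t) ~ u(a + j t) / (a + j t); averaging over the step t bounds the mass of u^2 on
   [0, d] by (d/r)^3 times its mass on [0, r] plus the Taylor remainder, for d = r / (64 2^p).
   On the other hand |e^(i theta)| = 1 gives |F|^2 <= 2 |F - e^(i theta)|^2 + 2 and
   1/2 - |F|^2 <= |F - e^(i theta)|^2, so the distance D to the plane wave satisfies
   D >= d L / 2 - (mass of |F|^2 on [0, d]) and (mass on [0, r]) <= 2 D + 2 r L, whence D >= d L / 4.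
   Taking r = min(L, rho), where rho balances the derivative energies, gives the two constants. *)

From Stdlib Require Import Reals Lra Lia Psatz List.
From Coquelicot Require Import Coquelicot.
Open Scope R_scope.

Definition cont (f : R -> R) : Prop := forall x, continuous f x.

Definition cont2 (g : R -> R -> R) : Prop :=
  forall z : R * R, continuous (fun w : R * R => g (fst w) (snd w)) z.

Section Continuity.

Lemma cont_plus f g : cont f -> cont g -> cont (fun x => f x + g x).
Proof. intros H1 H2 x. apply (continuous_plus f g); auto. Qed.
Lemma cont_minus f g : cont f -> cont g -> cont (fun x => f x - g x).
Proof. intros H1 H2 x. apply (continuous_minus f g); auto. Qed.
Lemma cont_mult f g : cont f -> cont g -> cont (fun x => f x * g x).
Proof. intros H1 H2 x. apply (continuous_mult f g); auto. Qed.
Lemma cont_const c : cont (fun _ => c).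
Proof. intros x. apply continuous_const. Qed.
Lemma cont_id : cont (fun x => x).
Proof. intros x. apply continuous_id. Qed.
Lemma cont_ext f g : (forall x, f x = g x) -> cont f -> cont g.
Proof. intros H Hf x. apply (continuous_ext f); auto. Qed.
Lemma cont_scal c f : cont f -> cont (fun x => c * f x).
Proof. intros; apply cont_mult; auto; apply cont_const. Qed.
Lemma cont_pow f n : cont f -> cont (fun x => f x ^ n).
Proof.
  intros Hf. induction n.
  - apply cont_ext with (fun _ => 1); [intros; simpl; ring|apply cont_const].
  - apply cont_ext with (fun x => f x * f x ^ n); [intros; simpl; ring|].
    apply cont_mult; auto.
Qed.
Lemma cont_comp f g : cont f -> cont g -> cont (fun x => g (f x)).
Proof. intros H1 H2 x. apply (continuous_comp f g); auto. Qed.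
Lemma cont_affine_comp f u v : cont f -> cont (fun y => f (u * y + v)).
Proof.
  intros H. apply (cont_comp (fun y => u * y + v) f); auto.
  apply cont_plus; [apply cont_scal, cont_id|apply cont_const].
Qed.

Lemma cont2_continuity_2d_pt g : cont2 g -> forall x y, continuity_2d_pt g x y.
Proof. intros H x y. apply continuity_2d_pt_filterlim, (H (x,y)). Qed.

Lemma cont2_slice1 g : cont2 g -> forall y, cont (fun x => g x y).
Proof.
  intros H y x.
  apply (continuous_comp_2 (fun x => x) (fun _ => y) g);
    [apply continuous_id|apply continuous_const|apply (H (x,y))].
Qed.

Lemma cont2_slice2 g : cont2 g -> forall x, cont (fun y => g x y).
Proof.
  intros H x y.
  apply (continuous_comp_2 (fun _ => x) (fun y => y) g);
    [apply continuous_const|apply continuous_id|apply (H (x,y))].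
Qed.

Lemma cont2_swap g : cont2 g -> cont2 (fun y x => g x y).
Proof.
  intros H [y x]. simpl.
  apply (continuous_comp_2 (fun w : R*R => snd w) (fun w : R*R => fst w) g);
    [apply continuous_snd|apply continuous_fst|apply (H (x,y))].
Qed.

Lemma cont2_plus f g : cont2 f -> cont2 g -> cont2 (fun x y => f x y + g x y).
Proof.
  intros H1 H2 z.
  apply (continuous_plus (fun w : R*R => f (fst w) (snd w)) (fun w : R*R => g (fst w) (snd w))); auto.
Qed.
Lemma cont2_minus f g : cont2 f -> cont2 g -> cont2 (fun x y => f x y - g x y).
Proof.
  intros H1 H2 z.
  apply (continuous_minus (fun w : R*R => f (fst w) (snd w)) (fun w : R*R => g (fst w) (snd w))); auto.
Qed.
Lemma cont2_mult f g : cont2 f -> cont2 g -> cont2 (fun x y => f x y * g x y).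
Proof.
  intros H1 H2 z.
  apply (continuous_mult (fun w : R*R => f (fst w) (snd w)) (fun w : R*R => g (fst w) (snd w))); auto.
Qed.
Lemma cont2_const c : cont2 (fun _ _ => c).
Proof. intros z. apply continuous_const. Qed.
Lemma cont2_ext f g : (forall x y, f x y = g x y) -> cont2 f -> cont2 g.
Proof. intros H Hf z. apply (continuous_ext (fun w : R*R => f (fst w) (snd w))); auto. Qed.
Lemma cont2_sq f : cont2 f -> cont2 (fun x y => f x y ^ 2).
Proof.
  intros H. apply cont2_ext with (fun x y => f x y * f x y); [intros; ring|]. apply cont2_mult; auto.
Qed.
Lemma cont2_fst : cont2 (fun x y => x).
Proof. intros [x y]. apply continuous_fst. Qed.
Lemma cont2_snd : cont2 (fun x y => y).
Proof. intros [x y]. apply continuous_snd. Qed.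
Lemma cont2_cos f : cont2 f -> cont2 (fun x y => cos (f x y)).
Proof.
  intros H z. apply (continuous_comp (fun w : R*R => f (fst w) (snd w)) cos); auto.
  apply continuous_cos.
Qed.
Lemma cont2_sin f : cont2 f -> cont2 (fun x y => sin (f x y)).
Proof.
  intros H z. apply (continuous_comp (fun w : R*R => f (fst w) (snd w)) sin); auto.
  apply continuity_pt_filterlim, continuity_sin.
Qed.

End Continuity.

Section Integrals.

Lemma ex_RInt_cont f a b : cont f -> ex_RInt f a b.
Proof. intros H. apply (ex_RInt_continuous (V := R_CompleteNormedModule)). intros; apply H. Qed.

Lemma RInt_ext_R (f g : R -> R) a b : (forall x, f x = g x) -> RInt f a b = RInt g a b.
Proof. intros H. apply (RInt_ext (V := R_CompleteNormedModule)). intros; apply H. Qed.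
Lemma RInt_point_R (f : R -> R) a : RInt f a a = 0.
Proof. apply (RInt_point (V := R_CompleteNormedModule)). Qed.
Lemma RInt_const_R a b c : RInt (fun _ => c) a b = (b - a) * c.
Proof. rewrite (RInt_const (V := R_CompleteNormedModule)). reflexivity. Qed.
Lemma RInt_plus_R (f g : R -> R) a b : ex_RInt f a b -> ex_RInt g a b ->
  RInt (fun x => f x + g x) a b = RInt f a b + RInt g a b.
Proof. intros; apply (RInt_plus (V := R_CompleteNormedModule)); auto. Qed.
Lemma RInt_scal_R (f : R -> R) a b l : ex_RInt f a b ->
  RInt (fun x => l * f x) a b = l * RInt f a b.
Proof. intros; apply (RInt_scal (V := R_CompleteNormedModule)); auto. Qed.
Lemma RInt_Chasles_R (f : R -> R) a b c : ex_RInt f a b -> ex_RInt f b c ->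
  RInt f a b + RInt f b c = RInt f a c.
Proof. intros; apply (RInt_Chasles (V := R_CompleteNormedModule)); auto. Qed.
Lemma RInt_swap_R (f : R -> R) a b : ex_RInt f a b -> RInt f b a = - RInt f a b.
Proof. intros H. rewrite <- (opp_RInt_swap (V := R_CompleteNormedModule)); auto. Qed.
Lemma RInt_comp_lin_R (f : R -> R) u v a b : ex_RInt f (u * a + v) (u * b + v) ->
  RInt (fun y => u * f (u * y + v)) a b = RInt f (u * a + v) (u * b + v).
Proof. intros; apply (RInt_comp_lin (V := R_CompleteNormedModule)); auto. Qed.

Lemma RInt_affine f A B a b : cont f ->
  RInt (fun x => A * f x + B) a b = A * RInt f a b + B * (b - a).
Proof.
  intros H. rewrite RInt_plus_R; try apply ex_RInt_cont.
  - rewrite RInt_scal_R, RInt_const_R by (apply ex_RInt_cont; auto).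
    match goal with |- ?A = ?B => change (@eq R A B) end; ring.
  - apply cont_scal; auto.
  - apply cont_const.
Qed.

Lemma RInt_le_cont f g a b : a <= b -> cont f -> cont g ->
  (forall x, a <= x <= b -> f x <= g x) -> RInt f a b <= RInt g a b.
Proof. intros. apply RInt_le; auto; try apply ex_RInt_cont; auto. intros; apply H2; lra. Qed.

Lemma RInt_nonneg_cont f a b : a <= b -> cont f ->
  (forall x, a <= x <= b -> 0 <= f x) -> 0 <= RInt f a b.
Proof.
  intros. rewrite <- (Rmult_0_r (b - a)), <- RInt_const_R.
  apply RInt_le_cont; auto. apply cont_const.
Qed.

Lemma RInt_le_subinterval f a b c d : cont f -> (forall x, a <= x <= b -> 0 <= f x) ->
  a <= c -> c <= d -> d <= b -> RInt f c d <= RInt f a b.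
Proof.
  intros Hf Hp H1 H2 H3.
  rewrite <- (RInt_Chasles_R f a c b), <- (RInt_Chasles_R f c d b) by (apply ex_RInt_cont; auto).
  assert (0 <= RInt f a c) by (apply RInt_nonneg_cont; auto; intros; apply Hp; lra).
  assert (0 <= RInt f d b) by (apply RInt_nonneg_cont; auto; intros; apply Hp; lra).
  lra.
Qed.

Lemma RInt_Cauchy_Schwarz h a b : a <= b -> cont h ->
  (RInt h a b) ^ 2 <= (b - a) * RInt (fun x => h x ^ 2) a b.
Proof.
  intros Hab Hh.
  destruct (Req_dec a b) as [E|E].
  { subst. rewrite !RInt_point_R. simpl; lra. }
  set (m := RInt h a b / (b - a)).
  (* expand the nonnegative integral of (h - mean h)^2 *)
  assert (H0 : 0 <= RInt (fun x => (-2 * m) * h x + (h x ^ 2 + m ^ 2)) a b).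
  { apply RInt_nonneg_cont; auto.
    - apply cont_plus; [apply cont_scal; auto|apply cont_plus; [apply cont_pow; auto|apply cont_const]].
    - intros x _. assert (Hq := pow2_ge_0 (h x - m)). lra. }
  rewrite RInt_plus_R, RInt_scal_R, RInt_plus_R, RInt_const_R in H0;
    try apply ex_RInt_cont; auto using cont_pow, cont_const, cont_scal, cont_plus.
  unfold m in H0.
  assert (Key : forall I J : R,
    0 <= -2 * (I / (b - a)) * I + (J + (b - a) * (I / (b - a)) ^ 2) -> I ^ 2 <= (b - a) * J).
  { intros I J HJ.
    replace (-2 * (I / (b - a)) * I + (J + (b - a) * (I / (b - a)) ^ 2))
      with (((b - a) * J - I ^ 2) / (b - a)) in HJ by (field; lra).
    apply Rmult_le_compat_r with (r := b - a) in HJ; [|lra].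
    replace (((b - a) * J - I ^ 2) / (b - a) * (b - a)) with ((b - a) * J - I ^ 2) in HJ
      by (field; lra).
    lra. }
  exact (Key _ _ H0).
Qed.

Lemma abs_RInt_minus_le (f1 f2 : R -> R) c d e : cont f1 -> cont f2 ->
  (forall t, Rmin c d <= t <= Rmax c d -> Rabs (f1 t - f2 t) <= e) ->
  Rabs (RInt f1 c d - RInt f2 c d) <= (Rmax c d - Rmin c d) * e.
Proof.
  intros H1 H2 Hb.
  assert (Hc : cont (fun y => f1 y - f2 y)) by (apply cont_minus; auto).
  replace (RInt f1 c d - RInt f2 c d) with (RInt (fun y => f1 y - f2 y) c d)
    by (apply (RInt_minus (V := R_CompleteNormedModule)); apply ex_RInt_cont; auto).
  destruct (Rle_dec c d) as [Hcd|Hcd].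
  - rewrite Rmin_left, Rmax_right in * by lra.
    apply abs_RInt_le_const; auto. apply ex_RInt_cont; auto.
  - rewrite Rmin_right, Rmax_left in * by lra.
    rewrite RInt_swap_R, Rabs_Ropp by (apply ex_RInt_cont; auto).
    apply abs_RInt_le_const; [lra|apply ex_RInt_cont; auto|auto].
Qed.

End Integrals.

Section Double_integrals.

Lemma RInt_param_continuous g c d : cont2 g -> cont (fun x => RInt (fun y => g x y) c d).
Proof.
  intros H x0.
  apply continuity_pt_filterlim. intros eps Heps.
  assert (Hcd : Rmin c d <= Rmax c d) by (apply Rle_trans with c; [apply Rmin_l|apply Rmax_l]).
  set (e := eps / (Rmax c d - Rmin c d + 1)).
  assert (He : 0 < e) by (unfold e; apply Rdiv_lt_0_compat; lra).
  assert (Hee : e * (Rmax c d - Rmin c d + 1) = eps) by (unfold e; field; lra).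
  clearbody e.
  destruct (uniform_continuity_2d g (x0 - 1) (x0 + 1) (Rmin c d) (Rmax c d))
    with (eps := mkposreal e He) as [del Hdel].
  { intros; apply cont2_continuity_2d_pt; auto. }
  exists (Rmin del 1). split; [apply Rmin_glb_lt; [apply cond_pos|lra]|].
  intros x [_ Hx]. change (Rabs (x - x0) < Rmin del 1) in Hx.
  assert (Hx1 : Rabs (x - x0) < del) by (apply Rlt_le_trans with (1 := Hx), Rmin_l).
  assert (Hx2 : Rabs (x - x0) < 1) by (apply Rlt_le_trans with (1 := Hx), Rmin_r).
  change (Rabs (RInt (fun y => g x y) c d - RInt (fun y => g x0 y) c d) < eps).
  eapply Rle_lt_trans.
  { apply abs_RInt_minus_le with (e := e); try apply cont2_slice2; auto.
    intros t Ht. left. apply (Hdel x0 t x t); try lra.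
    - apply Rabs_lt_between in Hx2. split; lra.
    - rewrite Rminus_diag, Rabs_R0. apply cond_pos. }
  nra.
Qed.

Lemma RInt_param_continuous_swap g a b : cont2 g -> cont (fun y => RInt (fun x => g x y) a b).
Proof. intros H. apply (RInt_param_continuous (fun y x => g x y)), cont2_swap, H. Qed.

(* With [b] replaced by a variable [T], both sides have derivative [RInt (fun y => g T y) c d]
   and vanish at [T = a]. *)
Lemma RInt_Fubini g a b c d : cont2 g ->
  RInt (fun x => RInt (fun y => g x y) c d) a b =
  RInt (fun y => RInt (fun x => g x y) a b) c d.
Proof.
  intros H.
  set (Phi := fun T => RInt (fun y => RInt (fun x => g x y) a T) c d).
  set (f := fun T y => RInt (fun x => g x y) a T).
  assert (Hfd : forall T y, is_derive (fun u => f u y) T (g T y)).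
  { intros T y. apply (is_derive_RInt (fun x => g x y) _ a).
    - apply filter_forall. intros b0. apply (RInt_correct (V := R_CompleteNormedModule)).
      apply ex_RInt_cont, cont2_slice1, H.
    - apply cont2_slice1, H. }
  assert (HD : forall T y, Derive (fun u => f u y) T = g T y) by (intros; apply is_derive_unique, Hfd).
  assert (Hd : forall T, is_derive Phi T (RInt (fun y => g T y) c d)).
  { intros T.
    assert (Hpar : is_derive (fun T => RInt (fun t => f T t) c d) T
                     (RInt (fun t => Derive (fun u => f u t) T) c d)).
    { apply is_derive_RInt_param.
      - apply filter_forall. intros x1 t _. eexists; apply Hfd.
      - intros t _ eps. destruct (cont2_continuity_2d_pt g H T t eps) as [del Hdel].
        exists del. intros u v Hu Hv. rewrite !HD. apply Hdel; auto.
      - apply filter_forall. intros y. apply ex_RInt_cont, RInt_param_continuous_swap, H. }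
    erewrite RInt_ext_R; [exact Hpar|]. intros; symmetry; apply HD. }
  assert (Hi := is_RInt_derive Phi _ a b (fun x _ => Hd x)
                  (fun x _ => RInt_param_continuous g c d H x)).
  apply is_RInt_unique in Hi. rewrite Hi.
  unfold Phi, minus, plus, opp; simpl.
  rewrite (RInt_ext_R (fun y => RInt (fun x => g x y) a a) (fun _ => 0))
    by (intros; apply RInt_point_R).
  rewrite RInt_const_R. ring.
Qed.

Definition RInt2 (g : R -> R -> R) (a b c d : R) : R :=
  RInt (fun x => RInt (fun y => g x y) c d) a b.

Lemma RInt2_le g h a b c d : a <= b -> c <= d -> cont2 g -> cont2 h ->
  (forall x y, a <= x <= b -> c <= y <= d -> g x y <= h x y) ->
  RInt2 g a b c d <= RInt2 h a b c d.
Proof.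
  intros Hab Hcd Hg Hh Hle. unfold RInt2.
  apply RInt_le_cont; try apply RInt_param_continuous; auto.
  intros x Hx. apply RInt_le_cont; try apply cont2_slice2; auto.
Qed.

Lemma RInt2_nonneg g a b c d : a <= b -> c <= d -> cont2 g ->
  (forall x y, a <= x <= b -> c <= y <= d -> 0 <= g x y) -> 0 <= RInt2 g a b c d.
Proof.
  intros Hab Hcd Hg Hp. unfold RInt2.
  apply RInt_nonneg_cont; try apply RInt_param_continuous; auto.
  intros x Hx. apply RInt_nonneg_cont; try apply cont2_slice2; auto.
Qed.

Lemma RInt2_le_subinterval g a b a' b' c d : c <= d -> cont2 g ->
  (forall x y, a <= x <= b -> c <= y <= d -> 0 <= g x y) ->
  a <= a' -> a' <= b' -> b' <= b -> RInt2 g a' b' c d <= RInt2 g a b c d.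
Proof.
  intros Hcd Hg Hp H1 H2 H3. unfold RInt2.
  apply RInt_le_subinterval; auto; [apply RInt_param_continuous; auto|].
  intros x Hx. apply RInt_nonneg_cont; try apply cont2_slice2; auto.
Qed.

Lemma RInt2_affine g A B a b c d : cont2 g ->
  RInt2 (fun x y => A * g x y + B) a b c d = A * RInt2 g a b c d + B * (d - c) * (b - a).
Proof.
  intros Hg. unfold RInt2.
  rewrite (RInt_ext_R _ (fun x => A * RInt (fun y => g x y) c d + B * (d - c)))
    by (intros; apply RInt_affine, cont2_slice2, Hg).
  rewrite RInt_affine by (apply RInt_param_continuous, Hg). ring.
Qed.

Lemma RInt2_plus g h a b c d : cont2 g -> cont2 h ->
  RInt2 (fun x y => g x y + h x y) a b c d = RInt2 g a b c d + RInt2 h a b c d.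
Proof.
  intros Hg Hh. unfold RInt2.
  rewrite (RInt_ext_R _ (fun x => RInt (fun y => g x y) c d + RInt (fun y => h x y) c d))
    by (intros; apply RInt_plus_R; apply ex_RInt_cont, cont2_slice2; auto).
  apply RInt_plus_R; apply ex_RInt_cont, RInt_param_continuous; auto.
Qed.

End Double_integrals.

Fixpoint sum1 (f : nat -> R) (n : nat) : R :=
  match n with O => 0 | S n' => sum1 f n' + f n end.

Definition sum0 (f : nat -> R) (n : nat) : R := f O + sum1 f n.

Section Finite_sums.

Lemma sum1_ext f g n : (forall j, (1 <= j <= n)%nat -> f j = g j) -> sum1 f n = sum1 g n.
Proof.
  induction n; simpl; intros H; auto.
  rewrite IHn by (intros; apply H; lia). rewrite H by lia. reflexivity.
Qed.
Lemma sum1_plus f g n : sum1 (fun j => f j + g j) n = sum1 f n + sum1 g n.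
Proof. induction n; simpl; [ring|rewrite IHn; ring]. Qed.
Lemma sum1_scal c f n : sum1 (fun j => c * f j) n = c * sum1 f n.
Proof. induction n; simpl; [ring|rewrite IHn; ring]. Qed.
Lemma sum1_le f g n : (forall j, (1 <= j <= n)%nat -> f j <= g j) -> sum1 f n <= sum1 g n.
Proof.
  induction n; simpl; intros H; [lra|].
  apply Rplus_le_compat; [apply IHn; intros; apply H; lia|apply H; lia].
Qed.
Lemma sum1_nonneg f n : (forall j, (1 <= j <= n)%nat -> 0 <= f j) -> 0 <= sum1 f n.
Proof.
  induction n; simpl; intros H; [lra|].
  apply Rplus_le_le_0_compat; [apply IHn; intros; apply H; lia|apply H; lia].
Qed.
Lemma Rabs_sum1_le f n : Rabs (sum1 f n) <= sum1 (fun j => Rabs (f j)) n.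
Proof.
  induction n; simpl; [rewrite Rabs_R0; lra|].
  eapply Rle_trans; [apply Rabs_triang|]. lra.
Qed.

Lemma sum1_Cauchy_Schwarz w x n : (forall j, (1 <= j <= n)%nat -> 0 <= w j) ->
  (sum1 (fun j => w j * x j) n) ^ 2 <= sum1 w n * sum1 (fun j => w j * x j ^ 2) n.
Proof.
  induction n; cbn [sum1]; intros H; [simpl; lra|].
  assert (IH := IHn (fun j Hj => H j ltac:(lia))).
  assert (Hw : 0 <= w (S n)) by (apply H; lia).
  assert (HW : 0 <= sum1 w n) by (apply sum1_nonneg; intros; apply H; lia).
  set (A := sum1 (fun j => w j * x j) n) in *.
  set (W := sum1 w n) in *.
  set (S2 := sum1 (fun j => w j * x j ^ 2) n) in *.
  set (y := x (S n)).
  assert (HS : 0 <= S2).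
  { apply sum1_nonneg; intros j Hj. apply Rmult_le_pos; [apply H; lia|apply pow2_ge_0]. }
  assert (Hk : 2 * A * y <= W * y ^ 2 + S2).
  { destruct (Req_dec W 0) as [HW0|HW0].
    - rewrite HW0 in IH |- *.
      assert (A = 0) as -> by (apply Rsqr_0_uniq; unfold Rsqr; simpl in IH; nra). nra.
    - assert (Hq : 0 <= W * (W * y ^ 2 + S2 - 2 * A * y)).
      { replace (W * (W * y ^ 2 + S2 - 2 * A * y)) with ((W * y - A) ^ 2 + (W * S2 - A ^ 2)) by ring.
        assert (Hsq := pow2_ge_0 (W * y - A)). lra. }
      apply Rmult_le_reg_l with W; [lra|nra]. }
  assert (w (S n) * (2 * A * y) <= w (S n) * (W * y ^ 2 + S2)) by (apply Rmult_le_compat_l; auto).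
  nra.
Qed.

Lemma sum0_S f n : sum0 f (S n) = sum0 f n + f (S n).
Proof. unfold sum0; simpl; ring. Qed.

Lemma sum0_nonneg f n : (forall j, (j <= n)%nat -> 0 <= f j) -> 0 <= sum0 f n.
Proof.
  intros H. apply Rplus_le_le_0_compat; [apply H; lia|]. apply sum1_nonneg. intros; apply H; lia.
Qed.

Lemma sum1_shift_le f n k : (forall j, 0 <= f j) ->
  sum1 (fun j => f (j + k)%nat) n <= sum0 f (n + k).
Proof.
  intros H. induction n.
  - simpl. apply sum0_nonneg. intros; apply H.
  - cbn [sum1]. replace (S n + k)%nat with (S (n + k)) by lia. rewrite sum0_S. lra.
Qed.

End Finite_sums.

Fixpoint binom (n k : nat) : R :=
  match n, k with
  | _, O => 1
  | O, S _ => 0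
  | S n', S k' => binom n' k' + binom n' (S k')
  end.

Section Binomials.

Lemma binom_0 n : binom n 0 = 1.
Proof. destruct n; reflexivity. Qed.
Lemma binom_SS n k : binom (S n) (S k) = binom n k + binom n (S k).
Proof. reflexivity. Qed.
Lemma binom_nonneg n k : 0 <= binom n k.
Proof. revert k; induction n; intros [|k]; simpl; try lra. generalize (IHn k) (IHn (S k)); lra. Qed.
Lemma binom_gt n k : (n < k)%nat -> binom n k = 0.
Proof. revert k; induction n; intros [|k] H; simpl; try lia; auto. rewrite !IHn by lia. ring. Qed.
Lemma binom_1 n : binom n 1 = INR n.
Proof. induction n; simpl; auto. rewrite IHn. destruct n; simpl; ring. Qed.
Lemma binom_nn n : binom n n = 1.
Proof. induction n; simpl; auto. rewrite IHn, binom_gt by lia. ring. Qed.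

Lemma binom_absorb n j : INR (S j) * binom (S n) (S j) = INR (S n) * binom n j.
Proof.
  revert j; induction n; intros j.
  - destruct j; simpl; ring.
  - destruct j as [|k].
    + rewrite binom_SS, binom_1, binom_0, !S_INR. simpl. ring.
    + rewrite (binom_SS (S n) (S k)), Rmult_plus_distr_l, (IHn (S k)).
      rewrite (S_INR (S k)), Rmult_plus_distr_r, Rmult_1_l, (IHn k), !binom_SS, !S_INR. ring.
Qed.

Lemma sum0_binom n : sum0 (binom n) n = 2 ^ n.
Proof.
  induction n; [unfold sum0; simpl; ring|].
  assert (H : forall m, (m <= n)%nat ->
    sum0 (binom (S n)) m = sum0 (binom n) m + sum0 (binom n) m - binom n m).
  { induction m; intros Hm.
    - unfold sum0; simpl sum1. rewrite !binom_0. ring.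
    - rewrite !sum0_S, IHm by lia. rewrite binom_SS. ring. }
  rewrite sum0_S, H, IHn, binom_SS, binom_nn, (binom_gt n (S n)) by lia. simpl. ring.
Qed.

Lemma sum1_binom_le n : sum1 (binom n) n <= 2 ^ n.
Proof. rewrite <- sum0_binom. unfold sum0. rewrite binom_0. lra. Qed.

Lemma binom_div_rising3 n j :
  binom n j / (INR (S j) * INR (S (S j)) * INR (S (S (S j)))) =
  binom (S (S (S n))) (S (S (S j))) / (INR (S n) * INR (S (S n)) * INR (S (S (S n)))).
Proof.
  assert (H1 := binom_absorb n j).
  assert (H2 := binom_absorb (S n) (S j)).
  assert (H3 := binom_absorb (S (S n)) (S (S j))).
  assert (P : forall m, 0 < INR (S m)) by (intros; apply lt_0_INR; lia).
  assert (HX := P j). assert (HX1 := P (S j)). assert (HX2 := P (S (S j))).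
  assert (HY := P n). assert (HY1 := P (S n)). assert (HY2 := P (S (S n))).
  assert (E : binom (S (S (S n))) (S (S (S j))) * (INR (S j) * INR (S (S j)) * INR (S (S (S j))))
             = binom n j * (INR (S n) * INR (S (S n)) * INR (S (S (S n))))).
  { replace (binom (S (S (S n))) (S (S (S j))) * (INR (S j) * INR (S (S j)) * INR (S (S (S j)))))
      with (INR (S (S (S j))) * binom (S (S (S n))) (S (S (S j))) * INR (S (S j)) * INR (S j))
      by ring.
    rewrite H3.
    replace (INR (S (S (S n))) * binom (S (S n)) (S (S j)) * INR (S (S j)) * INR (S j))
      with (INR (S (S j)) * binom (S (S n)) (S (S j)) * INR (S (S (S n))) * INR (S j)) by ring.
    rewrite H2.
    replace (INR (S (S n)) * binom (S n) (S j) * INR (S (S (S n))) * INR (S j))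
      with (INR (S j) * binom (S n) (S j) * INR (S (S n)) * INR (S (S (S n)))) by ring.
    rewrite H1. ring. }
  set (X := INR (S j) * INR (S (S j)) * INR (S (S (S j)))) in *.
  set (Y := INR (S n) * INR (S (S n)) * INR (S (S (S n)))) in *.
  assert (HX0 : X <> 0) by (apply Rgt_not_eq; unfold X; repeat apply Rmult_lt_0_compat; auto).
  assert (HY0 : Y <> 0) by (apply Rgt_not_eq; unfold Y; repeat apply Rmult_lt_0_compat; auto).
  apply Rmult_eq_reg_r with (X * Y); [|apply Rmult_integral_contrapositive; auto].
  replace (binom n j / X * (X * Y)) with (binom n j * Y) by (field; auto).
  replace (binom (S (S (S n))) (S (S (S j))) / Y * (X * Y))
    with (binom (S (S (S n))) (S (S (S j))) * X) by (field; auto).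
  symmetry. exact E.
Qed.

Lemma inv_cube_le j : (1 <= j)%nat ->
  / INR j ^ 3 <= 24 / (INR (S j) * INR (S (S j)) * INR (S (S (S j)))).
Proof.
  intros Hj. rewrite !S_INR.
  assert (H1 : 1 <= INR j) by (apply (le_INR 1); auto).
  set (x := INR j) in *.
  assert (Hp : 0 < x ^ 3) by (apply pow_lt; lra).
  assert (Hq : 0 < (x + 1) * (x + 1 + 1) * (x + 1 + 1 + 1)) by (repeat apply Rmult_lt_0_compat; lra).
  replace (/ x ^ 3) with (24 / (24 * x ^ 3)) by (field; lra).
  unfold Rdiv. apply Rmult_le_compat_l; [lra|]. apply Rinv_le_contravar; [auto|]. simpl. nra.
Qed.

(* Comparing [1/j^3] with [24/((j+1)(j+2)(j+3))] turns the sum into a shifted binomial sum. *)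
Lemma sum1_binom_div_cube N :
  sum1 (fun j => binom N j / INR j ^ 3) N <=
  192 * 2 ^ N / (INR (S N) * INR (S (S N)) * INR (S (S (S N)))).
Proof.
  set (Y := INR (S N) * INR (S (S N)) * INR (S (S (S N)))).
  assert (HY : 0 < Y) by (unfold Y; repeat apply Rmult_lt_0_compat; apply lt_0_INR; lia).
  apply Rle_trans with (sum1 (fun j => 24 / Y * binom (N + 3) (j + 3)) N).
  - apply sum1_le. intros j Hj.
    apply Rle_trans with (binom N j * (24 / (INR (S j) * INR (S (S j)) * INR (S (S (S j)))))).
    + apply Rmult_le_compat_l; [apply binom_nonneg|]. apply inv_cube_le; lia.
    + right. replace (N + 3)%nat with (S (S (S N))) by lia.
      replace (j + 3)%nat with (S (S (S j))) by lia.
      transitivity (24 * (binom N j / (INR (S j) * INR (S (S j)) * INR (S (S (S j))))));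
        [unfold Rdiv; ring|].
      rewrite binom_div_rising3. fold Y. unfold Rdiv. ring.
  - rewrite sum1_scal.
    apply Rle_trans with (24 / Y * sum0 (binom (N + 3)) (N + 3)).
    + apply Rmult_le_compat_l; [apply Rdiv_le_0_compat; lra|].
      apply (sum1_shift_le (binom (N + 3)) N 3). intros; apply binom_nonneg.
    + rewrite sum0_binom, pow_add. right. simpl. field. lra.
Qed.

End Binomials.

(* The N-th forward difference of [h] at 0, times (-1)^N. *)
Fixpoint alt_binom_sum (N : nat) (h : nat -> R) : R :=
  match N with
  | O => h O
  | S N' => alt_binom_sum N' h - alt_binom_sum N' (fun j => h (S j))
  end.

(* [h] is a polynomial sequence of degree at most [n]: its n-th difference is constant. *)
Fixpoint poly_seq (n : nat) (h : nat -> R) : Prop :=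
  match n with
  | O => forall j, h j = h O
  | S n' => poly_seq n' (fun j => h (S j) - h j)
  end.

Definition poly_sum (c : nat -> R) (N : nat) (y : R) : R := sum1 (fun m => c m * y ^ (m - 1)) N.

Section Finite_differences.

Lemma alt_binom_sum_minus N h1 h2 :
  alt_binom_sum N (fun j => h1 j - h2 j) = alt_binom_sum N h1 - alt_binom_sum N h2.
Proof.
  revert h1 h2; induction N; intros h1 h2; simpl; auto.
  rewrite IHN, (IHN (fun j => h1 (S j)) (fun j => h2 (S j))). ring.
Qed.

Lemma alt_binom_sum_explicit N h :
  alt_binom_sum N h = sum0 (fun j => (-1) ^ j * binom N j * h j) N.
Proof.
  revert h; induction N; intros h; [unfold sum0; simpl; ring|].
  simpl alt_binom_sum. rewrite !IHN.
  assert (G : forall m, (m <= N)%nat ->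
    sum0 (fun j => (-1) ^ j * binom (S N) j * h j) (S m) =
    sum0 (fun j => (-1) ^ j * binom N j * h j) (S m)
    - sum0 (fun j => (-1) ^ j * binom N j * h (S j)) m).
  { induction m; intros Hm.
    - unfold sum0; simpl. rewrite !binom_0. ring.
    - rewrite sum0_S, IHm, !sum0_S, (binom_SS N (S m)) by lia. simpl pow. ring. }
  rewrite G, sum0_S, (binom_gt N (S N)) by lia. ring.
Qed.

Lemma poly_seq_ext n h1 h2 : (forall j, h1 j = h2 j) -> poly_seq n h1 -> poly_seq n h2.
Proof.
  revert h1 h2; induction n; intros h1 h2 H; simpl.
  - intros P j. rewrite <- !H. auto.
  - apply IHn. intros; rewrite !H; auto.
Qed.
Lemma poly_seq_plus n h1 h2 : poly_seq n h1 -> poly_seq n h2 -> poly_seq n (fun j => h1 j + h2 j).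
Proof.
  revert h1 h2; induction n; intros h1 h2; simpl.
  - intros P1 P2 j. rewrite P1, P2. auto.
  - intros P1 P2. eapply poly_seq_ext; [|apply (IHn _ _ P1 P2)]. intros; simpl; ring.
Qed.
Lemma poly_seq_scal n c h : poly_seq n h -> poly_seq n (fun j => c * h j).
Proof.
  revert h; induction n; intros h; simpl.
  - intros P j. rewrite P. auto.
  - intros P. eapply poly_seq_ext; [|apply (IHn _ P)]. intros; simpl; ring.
Qed.
Lemma poly_seq_zero n : poly_seq n (fun _ => 0).
Proof. induction n; simpl; auto. eapply poly_seq_ext; [|apply IHn]. intros; simpl; ring. Qed.
Lemma poly_seq_S n h : poly_seq n h -> poly_seq (S n) h.
Proof.
  revert h; induction n; intros h; simpl.
  - intros P j. rewrite (P (S j)), (P j), (P 1%nat). reflexivity.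
  - intros P. exact (IHn _ P).
Qed.
Lemma poly_seq_le n m h : (n <= m)%nat -> poly_seq n h -> poly_seq m h.
Proof. intros H; induction H; auto. intros P; apply poly_seq_S; auto. Qed.
Lemma poly_seq_shift n h : poly_seq n h -> poly_seq n (fun j => h (S j)).
Proof.
  revert h; induction n; intros h; simpl.
  - intros P j. rewrite (P (S j)), (P 1%nat). reflexivity.
  - intros P. exact (IHn _ P).
Qed.

Lemma poly_seq_mul_affine a t n h :
  poly_seq n h -> poly_seq (S n) (fun j => (a + INR j * t) * h j).
Proof.
  revert h; induction n; intros h P.
  - change (forall j, (a + INR (S j) * t) * h (S j) - (a + INR j * t) * h j =
      (a + INR 1 * t) * h 1%nat - (a + INR 0 * t) * h 0%nat).
    intros j. rewrite (P (S j)), (P j), (P 1%nat), S_INR. simpl. ring.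
  - change (poly_seq (S n) (fun j => (a + INR (S j) * t) * h (S j) - (a + INR j * t) * h j)).
    apply poly_seq_ext with (fun j => (a + INR j * t) * (h (S j) - h j) + t * h (S j));
      [intros j; rewrite S_INR; ring|].
    apply poly_seq_plus; [apply IHn, P|apply poly_seq_scal, poly_seq_shift, P].
Qed.

Lemma poly_seq_pow a t k : poly_seq k (fun j => (a + INR j * t) ^ k).
Proof.
  induction k; [simpl; auto|].
  apply poly_seq_ext with (fun j => (a + INR j * t) * (a + INR j * t) ^ k); [intros; simpl; ring|].
  apply poly_seq_mul_affine, IHk.
Qed.

Lemma alt_binom_sum_poly_seq n h : poly_seq n h -> alt_binom_sum (S n) h = 0.
Proof.
  revert h; induction n; intros h P.
  - simpl in *. rewrite (P 1%nat). ring.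
  - change (alt_binom_sum (S n) h - alt_binom_sum (S n) (fun j => h (S j)) = 0).
    assert (E := alt_binom_sum_minus (S n) (fun j => h (S j)) h).
    cbv beta in E. rewrite (IHn _ P) in E. lra.
Qed.

Lemma poly_seq_poly_sum c N n a t : (N <= S n)%nat ->
  poly_seq n (fun j => poly_sum c N (a + INR j * t)).
Proof.
  unfold poly_sum. induction N; intros HN; [apply poly_seq_zero|].
  apply poly_seq_plus; [apply IHN; lia|].
  apply poly_seq_scal, poly_seq_le with (S N - 1)%nat; [lia|apply poly_seq_pow].
Qed.

Lemma poly_sum_alt_binom c N a t :
  poly_sum c N a = - sum1 (fun j => (-1) ^ j * binom N j * poly_sum c N (a + INR j * t)) N.
Proof.
  destruct N as [|n]; [unfold poly_sum; simpl; ring|].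
  assert (H := alt_binom_sum_poly_seq n _ (poly_seq_poly_sum c (S n) n a t ltac:(lia))).
  rewrite alt_binom_sum_explicit in H. unfold sum0 in H. simpl INR in H.
  rewrite Rmult_0_l, Rplus_0_r, binom_0 in H. simpl pow in H. lra.
Qed.

End Finite_differences.

Section One_dimensional_estimate.

Lemma RInt_square d : RInt (fun x => x ^ 2) 0 d = d ^ 3 / 3.
Proof.
  assert (H := is_RInt_derive (fun x => x ^ 3 / 3) (fun x => x ^ 2) 0 d).
  apply is_RInt_unique in H. rewrite H. unfold minus, plus, opp; simpl. field.
  - intros x _. auto_derive; auto. field.
  - intros x _. apply (cont_pow (fun x => x) 2 cont_id x).
Qed.

Lemma RInt_sq_le_interval g L y t : cont g -> 0 <= y <= L -> 0 <= t <= L ->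
  (RInt g t y) ^ 2 <= L * RInt (fun x => g x ^ 2) 0 L.
Proof.
  intros Hg Hy Ht.
  assert (Hg2 : cont (fun x => g x ^ 2)) by (apply cont_pow; auto).
  assert (Hnn : forall x, 0 <= g x ^ 2) by (intros; apply pow2_ge_0).
  assert (Key : forall y t, 0 <= y <= L -> 0 <= t <= L -> t <= y ->
            (RInt g t y) ^ 2 <= L * RInt (fun x => g x ^ 2) 0 L).
  { clear y t Hy Ht. intros y t Hy Ht Hty.
    apply Rle_trans with ((y - t) * RInt (fun x => g x ^ 2) t y); [apply RInt_Cauchy_Schwarz; auto|].
    apply Rmult_le_compat; try lra.
    - apply RInt_nonneg_cont; auto.
    - apply RInt_le_subinterval; auto; lra. }
  destruct (Rle_dec t y) as [H|H]; [apply Key; auto|].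
  rewrite RInt_swap_R by (apply ex_RInt_cont; auto).
  replace ((- RInt g y t) ^ 2) with ((RInt g y t) ^ 2) by ring. apply Key; auto; lra.
Qed.

(* One-dimensional Sobolev embedding: average [w t] over [t] in [0, L] and control
   [w y - w t] by the derivative. *)
Lemma sobolev_sq_le (w g : R -> R) L : 0 < L -> cont w -> cont g ->
  (forall x, is_derive w x (g x)) -> forall y, 0 <= y <= L ->
  w y ^ 2 <= 2 / L * RInt (fun x => w x ^ 2) 0 L + 2 * L * RInt (fun x => g x ^ 2) 0 L.
Proof.
  intros HL Hw Hg Hd y Hy.
  set (G := RInt (fun x => g x ^ 2) 0 L).
  assert (Hpt : forall t, 0 <= t <= L -> w y ^ 2 <= 2 * w t ^ 2 + 2 * L * G).
  { intros t Ht.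
    assert (E : w y - w t = RInt g t y).
    { symmetry. apply is_RInt_unique, (is_RInt_derive w g t y); intros; auto. }
    assert (Hs := RInt_sq_le_interval g L y t Hg Hy Ht). fold G in Hs. rewrite <- E in Hs.
    assert (Hq := pow2_ge_0 (w t - (w y - w t))). nra. }
  assert (Hint : RInt (fun _ => w y ^ 2) 0 L <= RInt (fun t => 2 * w t ^ 2 + 2 * L * G) 0 L).
  { apply RInt_le_cont; auto; try lra; [apply cont_const|].
    apply cont_plus; [apply cont_scal, cont_pow; auto|apply cont_const]. }
  rewrite RInt_const_R, RInt_affine in Hint by (apply cont_pow; auto).
  apply Rmult_le_reg_l with L; auto.
  replace (L * (2 / L * RInt (fun x => w x ^ 2) 0 L + 2 * L * G))
    with (2 * RInt (fun x => w x ^ 2) 0 L + 2 * L * G * (L - 0)) by (field; lra).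
  lra.
Qed.

Lemma taylor_poly_sum (u : R -> R) N y :
  sum_f_R0 (fun m => (y - 0) ^ m / INR (Factorial.fact m) * Derive_n u m 0) N =
  u 0 + y * poly_sum (fun m => Derive_n u m 0 / INR (Factorial.fact m)) N y.
Proof.
  induction N; [unfold poly_sum; simpl; field|].
  change (sum_f_R0 (fun m => (y - 0) ^ m / INR (Factorial.fact m) * Derive_n u m 0) N +
          (y - 0) ^ S N / INR (Factorial.fact (S N)) * Derive_n u (S N) 0 =
          u 0 + y * (poly_sum (fun m => Derive_n u m 0 / INR (Factorial.fact m)) N y +
             Derive_n u (S N) 0 / INR (Factorial.fact (S N)) * y ^ (S N - 1))).
  rewrite IHN. replace (S N - 1)%nat with N by lia.
  assert (0 < INR (Factorial.fact (S N))) by (apply lt_0_INR, Factorial.lt_O_fact).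
  rewrite <- tech_pow_Rmult. replace (y - 0) with y by ring. field. lra.
Qed.

Lemma taylor_remainder_bound (u : R -> R) N L V :
  (forall k x, (k <= S N)%nat -> ex_derive_n u k x) ->
  u 0 = 0 -> 0 <= V -> (forall y, 0 <= y <= L -> Derive_n u (S N) y ^ 2 <= V) ->
  forall y, 0 <= y <= L ->
  Rabs (u y - y * poly_sum (fun m => Derive_n u m 0 / INR (Factorial.fact m)) N y) <=
  y ^ S N * (sqrt V / INR (Factorial.fact (S N))).
Proof.
  intros Hd H0 HV HB y Hy.
  assert (Hf : 0 < INR (Factorial.fact (S N))) by (apply lt_0_INR, Factorial.lt_O_fact).
  assert (HK : 0 <= sqrt V / INR (Factorial.fact (S N))) by (apply Rdiv_le_0_compat, Hf; apply sqrt_pos).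
  destruct (Req_dec y 0) as [->|E].
  { rewrite H0, Rmult_0_l, Rminus_0_r, Rabs_R0. apply Rmult_le_pos; [simpl; lra|auto]. }
  destruct (Taylor_Lagrange u N 0 y) as [z [Hz Heq]]; [lra|intros; apply Hd; auto|].
  rewrite taylor_poly_sum, H0 in Heq. rewrite Heq. replace (y - 0) with y by ring.
  match goal with |- Rabs ?A <= _ =>
    replace A with (y ^ S N * (Derive_n u (S N) z / INR (Factorial.fact (S N)))) by (field; lra) end.
  rewrite Rabs_mult, Rabs_right by (apply Rle_ge, pow_le; lra).
  apply Rmult_le_compat_l; [apply pow_le; lra|].
  unfold Rdiv. rewrite Rabs_mult, (Rabs_right (/ _)) by (apply Rle_ge; left; apply Rinv_0_lt_compat, Hf).
  apply Rmult_le_compat_r; [left; apply Rinv_0_lt_compat, Hf|].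
  rewrite <- sqrt_pow2 with (Rabs (Derive_n u (S N) z)) by apply Rabs_pos.
  apply sqrt_le_1_alt. rewrite <- Rsqr_pow2, <- Rsqr_abs, Rsqr_pow2. apply HB. lra.
Qed.

Lemma poly_sum_quotient_bound (u Q : R -> R) N K s y r : 0 <= K -> 0 < s <= y -> y <= r ->
  Rabs (u y - y * Q y) <= y ^ S N * K -> Rabs (Q y) <= Rabs (u y) / s + r ^ N * K.
Proof.
  intros HK Hs Hyr HT.
  replace (Q y) with ((u y - (u y - y * Q y)) / y) by (field; lra).
  unfold Rdiv. rewrite Rabs_mult, Rabs_inv, (Rabs_right y) by lra.
  apply Rle_trans with ((Rabs (u y) + y ^ S N * K) * / y).
  { apply Rmult_le_compat_r; [left; apply Rinv_0_lt_compat; lra|].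
    eapply Rle_trans; [apply Rabs_triang|]. rewrite Rabs_Ropp. lra. }
  rewrite Rmult_plus_distr_r. apply Rplus_le_compat.
  - apply Rmult_le_compat_l; [apply Rabs_pos|]. apply Rinv_le_contravar; lra.
  - replace (y ^ S N * K * / y) with (y ^ N * K) by (simpl; field; lra).
    apply Rmult_le_compat_r; auto. apply pow_incr; lra.
Qed.

Lemma sum1_binom_Cauchy_Schwarz N x :
  (sum1 (fun j => binom N j * x j) N) ^ 2 <= 2 ^ N * sum1 (fun j => binom N j * x j ^ 2) N.
Proof.
  eapply Rle_trans; [apply sum1_Cauchy_Schwarz; intros; apply binom_nonneg|].
  apply Rmult_le_compat_r; [|apply sum1_binom_le].
  apply sum1_nonneg; intros; apply Rmult_le_pos; [apply binom_nonneg|apply pow2_ge_0].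
Qed.

Lemma Rabs_extrapolated_le (u Q : R -> R) N K r a t t0 :
  0 <= K -> 0 < t0 <= t -> 0 <= a -> a + INR N * t <= r ->
  (forall y, 0 <= y <= r -> Rabs (u y - y * Q y) <= y ^ S N * K) ->
  Q a = - sum1 (fun j => (-1) ^ j * binom N j * Q (a + INR j * t)) N ->
  Rabs (Q a) <= sum1 (fun j => binom N j * (Rabs (u (a + INR j * t)) / (INR j * t0))) N
                + 2 ^ N * (r ^ N * K).
Proof.
  intros HK Ht Ha Har HT HQ.
  rewrite HQ, Rabs_Ropp. eapply Rle_trans; [apply Rabs_sum1_le|].
  assert (Hr : 0 <= r) by (assert (0 <= INR N * t) by (apply Rmult_le_pos; [apply pos_INR|lra]); lra).
  apply Rle_trans with
    (sum1 (fun j => binom N j * (Rabs (u (a + INR j * t)) / (INR j * t0)) + binom N j * (r ^ N * K)) N).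
  - apply sum1_le. intros j Hj.
    assert (Hj1 : 1 <= INR j) by (apply (le_INR 1); lia).
    assert (HjN : INR j <= INR N) by (apply le_INR; lia).
    rewrite !Rabs_mult, pow_1_abs, Rmult_1_l, (Rabs_right (binom N j)) by (apply Rle_ge, binom_nonneg).
    rewrite <- Rmult_plus_distr_l. apply Rmult_le_compat_l; [apply binom_nonneg|].
    assert (INR j * t0 <= INR j * t) by (apply Rmult_le_compat_l; lra).
    assert (INR j * t <= INR N * t) by (apply Rmult_le_compat_r; lra).
    apply (poly_sum_quotient_bound u Q N K); auto; try split; try nra.
    apply HT. nra.
  - rewrite sum1_plus. apply Rplus_le_compat_l.
    rewrite (sum1_ext _ (fun j => (r ^ N * K) * binom N j)) by (intros; ring).
    rewrite sum1_scal, Rmult_comm. apply Rmult_le_compat_r; [|apply sum1_binom_le].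
    apply Rmult_le_pos; [apply pow_le|]; auto.
Qed.

Lemma pow2_plus1_sq_le N : (2 ^ N + 1) ^ 2 <= 4 ^ S N.
Proof.
  assert (1 <= 2 ^ N) by (apply pow_R1_Rle; lra).
  assert (E : 4 ^ N = (2 ^ N) ^ 2)
    by (rewrite <- pow_mult, Nat.mul_comm, pow_mult; f_equal; simpl; ring).
  change (4 ^ S N) with (4 * 4 ^ N). rewrite E. nra.
Qed.

(* [u a ~ a Q(a)], and [Q(a)] is recovered from the values of [Q ~ u(y)/y] at the points
   [a + j t], none of which is closer to 0 than [t0]. *)
Lemma finite_difference_bound (u Q : R -> R) N K r a t t0 :
  0 <= K -> 0 < t0 <= t -> 0 <= a -> a + INR N * t <= r ->
  (forall y, 0 <= y <= r -> Rabs (u y - y * Q y) <= y ^ S N * K) ->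
  Q a = - sum1 (fun j => (-1) ^ j * binom N j * Q (a + INR j * t)) N ->
  u a ^ 2 <= 2 * a ^ 2 * 2 ^ N / t0 ^ 2 *
               sum1 (fun j => binom N j * u (a + INR j * t) ^ 2 / INR j ^ 2) N
             + 2 * a ^ 2 * 4 ^ S N * r ^ (2 * N) * K ^ 2.
Proof.
  intros HK Ht Ha Har HT HQ.
  assert (Hr : a <= r) by (assert (0 <= INR N * t) by (apply Rmult_le_pos; [apply pos_INR|lra]); lra).
  assert (HQa := Rabs_extrapolated_le u Q N K r a t t0 HK Ht Ha Har HT HQ).
  set (X := sum1 (fun j => binom N j * (Rabs (u (a + INR j * t)) / (INR j * t0))) N) in *.
  set (Sw := sum1 (fun j => binom N j * u (a + INR j * t) ^ 2 / INR j ^ 2) N).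
  set (E := (2 ^ N + 1) * r ^ N * K).
  assert (HE : 0 <= E).
  { unfold E. apply Rmult_le_pos; auto. apply Rmult_le_pos; [|apply pow_le; lra].
    assert (0 < 2 ^ N) by (apply pow_lt; lra). lra. }
  assert (HX : 0 <= X).
  { apply sum1_nonneg. intros j Hj. apply Rmult_le_pos; [apply binom_nonneg|].
    assert (1 <= INR j) by (apply (le_INR 1); lia).
    apply Rdiv_le_0_compat; [apply Rabs_pos|nra]. }
  assert (Hua : Rabs (u a) <= a * X + a * E).
  { replace (u a) with ((u a - a * Q a) + a * Q a) by ring.
    eapply Rle_trans; [apply Rabs_triang|].
    rewrite Rabs_mult, (Rabs_right a) by lra.
    assert (a ^ S N * K <= a * (r ^ N * K)).
    { simpl. rewrite <- Rmult_assoc. apply Rmult_le_compat_r; auto.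
      apply Rmult_le_compat_l; auto. apply pow_incr; lra. }
    assert (a * Rabs (Q a) <= a * (X + 2 ^ N * (r ^ N * K))) by (apply Rmult_le_compat_l; auto).
    assert (HT0 := HT a ltac:(lra)). unfold E. nra. }
  assert (Hsq : u a ^ 2 <= 2 * a ^ 2 * X ^ 2 + 2 * a ^ 2 * E ^ 2).
  { rewrite <- (pow2_abs (u a)).
    assert (Rabs (u a) ^ 2 <= (a * X + a * E) ^ 2) by (apply pow_incr; split; [apply Rabs_pos|auto]).
    assert (Hq := pow2_ge_0 (a * X - a * E)). nra. }
  assert (HCS : X ^ 2 <= 2 ^ N * Sw / t0 ^ 2).
  { unfold X. eapply Rle_trans; [apply sum1_binom_Cauchy_Schwarz|].
    unfold Rdiv at 2. rewrite Rmult_assoc. apply Rmult_le_compat_l; [left; apply pow_lt; lra|].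
    unfold Sw. rewrite Rmult_comm, <- sum1_scal. right. apply sum1_ext. intros j Hj.
    assert (1 <= INR j) by (apply (le_INR 1); lia).
    unfold Rdiv. rewrite Rpow_mult_distr, pow2_abs, Rinv_mult, Rpow_mult_distr, !pow_inv.
    field. lra. }
  assert (HE2 : E ^ 2 <= 4 ^ S N * r ^ (2 * N) * K ^ 2).
  { unfold E. rewrite !Rpow_mult_distr, <- pow_mult, Nat.mul_comm.
    apply Rmult_le_compat_r; [apply pow2_ge_0|].
    apply Rmult_le_compat_r; [apply pow_le; lra|apply pow2_plus1_sq_le]. }
  assert (Ha2 : 0 <= 2 * a ^ 2) by (assert (H := pow2_ge_0 a); lra).
  apply Rmult_le_compat_l with (r := 2 * a ^ 2) in HCS, HE2; auto.
  replace (2 * a ^ 2 * 2 ^ N / t0 ^ 2 * Sw) with (2 * a ^ 2 * (2 ^ N * Sw / t0 ^ 2)) by (field; lra).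
  lra.
Qed.

Lemma cont_sum1 (F : nat -> R -> R) N : (forall j, cont (F j)) -> cont (fun x => sum1 (fun j => F j x) N).
Proof. intros H. induction N; simpl; [apply cont_const|apply cont_plus; auto]. Qed.

Lemma RInt_sum1 (F : nat -> R -> R) N a b : (forall j, cont (F j)) ->
  RInt (fun x => sum1 (fun j => F j x) N) a b = sum1 (fun j => RInt (F j) a b) N.
Proof.
  intros H. induction N; simpl; [rewrite RInt_const_R; ring|].
  rewrite RInt_plus_R, IHN; try apply ex_RInt_cont; auto. apply cont_sum1; auto.
Qed.

Lemma RInt_dilate_le (f : R -> R) a j t0 t1 r : cont f -> (forall x, 0 <= f x) ->
  (1 <= j)%nat -> 0 <= a -> 0 <= t0 <= t1 -> a + INR j * t1 <= r ->
  RInt (fun t => f (a + INR j * t)) t0 t1 <= / INR j * RInt f 0 r.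
Proof.
  intros Hf Hp Hj Ha Ht Hr.
  assert (Hj1 : 1 <= INR j) by (apply (le_INR 1); lia).
  replace (RInt (fun t => f (a + INR j * t)) t0 t1)
    with (/ INR j * RInt (fun y => INR j * f (INR j * y + a)) t0 t1).
  2:{ rewrite (RInt_scal_R (fun y => f (INR j * y + a))) by (apply ex_RInt_cont, cont_affine_comp, Hf).
      rewrite <- Rmult_assoc, Rinv_l, Rmult_1_l by lra.
      apply RInt_ext_R. intros; f_equal; ring. }
  rewrite RInt_comp_lin_R by (apply ex_RInt_cont, Hf).
  apply Rmult_le_compat_l; [left; apply Rinv_0_lt_compat; lra|].
  assert (0 <= INR j * t0) by (apply Rmult_le_pos; lra).
  assert (INR j * t0 <= INR j * t1) by (apply Rmult_le_compat_l; lra).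
  apply RInt_le_subinterval; auto; lra.
Qed.

Lemma RInt_shifted_sum_le u N a t0 t1 r : cont u -> 0 <= a -> 0 <= t0 <= t1 ->
  a + INR N * t1 <= r ->
  RInt (fun t => sum1 (fun j => binom N j * u (a + INR j * t) ^ 2 / INR j ^ 2) N) t0 t1 <=
  192 * 2 ^ N / INR (S N) ^ 3 * RInt (fun y => u y ^ 2) 0 r.
Proof.
  intros Hu Ha Ht Hr.
  assert (Hcont : forall j, cont (fun t => binom N j / INR j ^ 2 * (u (INR j * t + a) ^ 2))).
  { intros j. apply cont_scal, cont_pow, cont_affine_comp, Hu. }
  assert (HU : 0 <= RInt (fun y => u y ^ 2) 0 r).
  { apply RInt_nonneg_cont; [|apply cont_pow, Hu|intros; apply pow2_ge_0].
    assert (0 <= INR N * t1) by (apply Rmult_le_pos; [apply pos_INR|lra]). lra. }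
  rewrite (RInt_ext_R _ (fun t => sum1 (fun j => binom N j / INR j ^ 2 * (u (INR j * t + a) ^ 2)) N))
    by (intros; apply sum1_ext; intros; unfold Rdiv; rewrite (Rplus_comm (INR _ * _)); ring).
  rewrite RInt_sum1 by auto.
  apply Rle_trans with (sum1 (fun j => binom N j / INR j ^ 3) N * RInt (fun y => u y ^ 2) 0 r).
  - rewrite Rmult_comm, <- sum1_scal. apply sum1_le. intros j Hj.
    assert (Hj1 : 1 <= INR j) by (apply (le_INR 1); lia).
    rewrite RInt_scal_R by (apply ex_RInt_cont, (cont_affine_comp (fun y => u y ^ 2)), cont_pow, Hu).
    apply Rle_trans with (binom N j / INR j ^ 2 * (/ INR j * RInt (fun y => u y ^ 2) 0 r)).
    + apply Rmult_le_compat_l; [apply Rdiv_le_0_compat; [apply binom_nonneg|apply pow_lt; lra]|].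
      rewrite (RInt_ext_R _ (fun t => (fun y => u y ^ 2) (a + INR j * t)))
        by (intros; rewrite Rplus_comm; reflexivity).
      apply (RInt_dilate_le (fun y => u y ^ 2) a j t0 t1 r);
        [apply cont_pow, Hu|intros; apply pow2_ge_0|lia|lra|lra|].
      assert (INR j * t1 <= INR N * t1) by (apply Rmult_le_compat_r; [lra|apply le_INR; lia]). lra.
    + right. field. lra.
  - apply Rmult_le_compat_r; auto.
    eapply Rle_trans; [apply sum1_binom_div_cube|].
    assert (Hp : 1 <= INR (S N)) by (apply (le_INR 1); lia).
    apply Rmult_le_compat_l; [apply Rmult_le_pos; [lra|apply pow_le; lra]|].
    apply Rinv_le_contravar; [apply pow_lt; lra|].
    rewrite !S_INR. generalize (pos_INR N). generalize (INR N). intros n Hn. simpl. nra.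
Qed.

(* Average the finite difference bound over the step [t] in [2r/(3(N+1)), r/(N+1)]. *)
Lemma averaged_bound (u Q : R -> R) N K r a :
  cont u -> 0 <= K -> 0 < r -> 0 <= a -> a <= r / INR (S N) ->
  (forall y, 0 <= y <= r -> Rabs (u y - y * Q y) <= y ^ S N * K) ->
  (forall t, Q a = - sum1 (fun j => (-1) ^ j * binom N j * Q (a + INR j * t)) N) ->
  u a ^ 2 <= 2592 * 4 ^ N * a ^ 2 * RInt (fun x => u x ^ 2) 0 r / r ^ 3
             + 2 * a ^ 2 * 4 ^ S N * r ^ (2 * N) * K ^ 2.
Proof.
  intros Hu HK Hr Ha Har HT HQ.
  assert (Hp1 : 1 <= INR (S N)) by (apply (le_INR 1); lia).
  assert (HpN : INR (S N) = INR N + 1) by apply S_INR.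
  set (p := INR (S N)) in *.
  set (t0 := 2 * r / (3 * p)). set (t1 := r / p).
  assert (Ht0 : 0 < t0) by (unfold t0; apply Rdiv_lt_0_compat; lra).
  assert (Ht01 : t1 - t0 = r / (3 * p)) by (unfold t0, t1; field; lra).
  assert (Hd : 0 < r / (3 * p)) by (apply Rdiv_lt_0_compat; lra).
  assert (Hgeo : a + INR N * t1 <= r).
  { assert (INR N * t1 + t1 = r) by (unfold t1; replace (INR N) with (p - 1) by lra; field; lra).
    fold t1 in Har. lra. }
  set (Sw := fun t => sum1 (fun j => binom N j * u (a + INR j * t) ^ 2 / INR j ^ 2) N).
  set (C1 := 2 * a ^ 2 * 2 ^ N / t0 ^ 2).
  set (C2 := 2 * a ^ 2 * 4 ^ S N * r ^ (2 * N) * K ^ 2).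
  assert (HSw : cont Sw).
  { apply cont_sum1. intros j.
    apply cont_ext with (fun t => binom N j / INR j ^ 2 * u (INR j * t + a) ^ 2);
      [intros; unfold Rdiv; rewrite (Rplus_comm (INR j * _)); ring|].
    apply cont_scal, cont_pow, cont_affine_comp, Hu. }
  assert (Hint : RInt (fun _ => u a ^ 2) t0 t1 <= RInt (fun t => C1 * Sw t + C2) t0 t1).
  { apply RInt_le_cont; [lra|apply cont_const|apply cont_plus; [apply cont_scal, HSw|apply cont_const]|].
    intros t Ht. apply (finite_difference_bound u Q N K r a t t0); auto; try lra.
    assert (INR N * t <= INR N * t1) by (apply Rmult_le_compat_l; [apply pos_INR|lra]). lra. }
  rewrite RInt_const_R, RInt_affine, Ht01 in Hint by exact HSw.
  assert (HS := RInt_shifted_sum_le u N a t0 t1 r Hu Ha ltac:(lra) Hgeo). fold Sw p in HS.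
  assert (HC1 : 0 <= C1).
  { unfold C1. apply Rdiv_le_0_compat; [|apply pow_lt; lra].
    apply Rmult_le_pos; [nra|apply pow_le; lra]. }
  assert (E : C1 * (192 * 2 ^ N / p ^ 3) = r / (3 * p) * (2592 * 4 ^ N * a ^ 2 / r ^ 3)).
  { unfold C1, t0. replace (4 ^ N) with (2 ^ N * 2 ^ N)
      by (rewrite <- Rpow_mult_distr; f_equal; ring).
    field. lra. }
  apply Rmult_le_compat_l with (r := C1) in HS; auto.
  rewrite <- Rmult_assoc, E in HS.
  apply Rmult_le_reg_l with (r / (3 * p)); auto.
  replace (r / (3 * p) * (2592 * 4 ^ N * a ^ 2 * RInt (fun x => u x ^ 2) 0 r / r ^ 3 + C2))
    with (r / (3 * p) * (2592 * 4 ^ N * a ^ 2 / r ^ 3) * RInt (fun x => u x ^ 2) 0 r + C2 * (r / (3 * p)))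
    by (field; lra).
  lra.
Qed.

Lemma RInt_sq_near0_le (u Q : R -> R) N K r d :
  cont u -> 0 <= K -> 0 < r -> 0 <= d -> d <= r / INR (S N) ->
  (forall y, 0 <= y <= r -> Rabs (u y - y * Q y) <= y ^ S N * K) ->
  (forall a t, Q a = - sum1 (fun j => (-1) ^ j * binom N j * Q (a + INR j * t)) N) ->
  RInt (fun a => u a ^ 2) 0 d <=
  d ^ 3 / 3 * (2592 * 4 ^ N * RInt (fun x => u x ^ 2) 0 r / r ^ 3
               + 2 * 4 ^ S N * r ^ (2 * N) * K ^ 2).
Proof.
  intros Hu HK Hr Hd Hdr HT HQ.
  set (A := 2592 * 4 ^ N * RInt (fun x => u x ^ 2) 0 r / r ^ 3 + 2 * 4 ^ S N * r ^ (2 * N) * K ^ 2).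
  apply Rle_trans with (RInt (fun a => A * a ^ 2) 0 d).
  - apply RInt_le_cont; auto; [apply cont_pow, Hu|apply cont_scal, cont_pow, cont_id|].
    intros a Ha. eapply Rle_trans; [apply (averaged_bound u Q N K r a); auto; lra|].
    right. unfold A. field. lra.
  - rewrite RInt_scal_R, RInt_square by (apply ex_RInt_cont, cont_pow, cont_id). right. field.
Qed.

(* Taylor expansion at 0 to order N, with the remainder controlled through the Sobolev bound
   on the (N+1)-st derivative. *)
Lemma RInt_sq_near0_taylor_le (u : R -> R) N L r d :
  (forall k x, (k <= S (S N))%nat -> ex_derive_n u k x) ->
  (forall k, (k <= S (S N))%nat -> cont (Derive_n u k)) ->
  u 0 = 0 -> 0 < r -> r <= L -> 0 <= d -> d <= r / INR (S N) ->
  RInt (fun a => u a ^ 2) 0 d <=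
  d ^ 3 / 3 * (2592 * 4 ^ N * RInt (fun x => u x ^ 2) 0 r / r ^ 3 +
     2 * 4 ^ S N * r ^ (2 * N) / INR (Factorial.fact (S N)) ^ 2 *
     (2 / L * RInt (fun x => Derive_n u (S N) x ^ 2) 0 L +
      2 * L * RInt (fun x => Derive_n u (S (S N)) x ^ 2) 0 L)).
Proof.
  intros Hd Hc H0 Hr HrL Hd0 Hdr.
  set (V := 2 / L * RInt (fun x => Derive_n u (S N) x ^ 2) 0 L +
            2 * L * RInt (fun x => Derive_n u (S (S N)) x ^ 2) 0 L).
  assert (Hsob : forall y, 0 <= y <= L -> Derive_n u (S N) y ^ 2 <= V).
  { apply sobolev_sq_le; try lra; try (apply Hc; lia).
    intros x. apply Derive_correct, (Hd (S (S N)) x); lia. }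
  assert (HV : 0 <= V) by (apply Rle_trans with (Derive_n u (S N) 0 ^ 2); [apply pow2_ge_0|apply Hsob; lra]).
  assert (Hf : 0 < INR (Factorial.fact (S N))) by (apply lt_0_INR, Factorial.lt_O_fact).
  set (K := sqrt V / INR (Factorial.fact (S N))).
  assert (HK2 : K ^ 2 = V / INR (Factorial.fact (S N)) ^ 2).
  { unfold K, Rdiv. rewrite Rpow_mult_distr, pow2_sqrt, pow_inv by auto. reflexivity. }
  set (Q := poly_sum (fun m => Derive_n u m 0 / INR (Factorial.fact m)) N).
  assert (HT : forall y, 0 <= y <= r -> Rabs (u y - y * Q y) <= y ^ S N * K).
  { intros y Hy. apply (taylor_remainder_bound u N L V); auto; lra. }
  assert (HK : 0 <= K) by (apply Rdiv_le_0_compat, Hf; apply sqrt_pos).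
  eapply Rle_trans.
  - exact (RInt_sq_near0_le u Q N K r d (Hc 0%nat ltac:(lia)) HK Hr Hd0 Hdr HT
             (fun a t => poly_sum_alt_binom _ N a t)).
  - right. rewrite HK2. unfold V. field. lra.
Qed.

End One_dimensional_estimate.

Definition smooth_x1 (m : nat) (g : R -> R -> R) : Prop :=
  (forall k x2 x, (k <= m)%nat -> ex_derive_n (fun t => g t x2) k x) /\
  (forall k, (k <= m)%nat -> cont2 (fun x1 x2 => Derive_n (fun t => g t x2) k x1)).

Definition dx1_sq (k : nat) (g : R -> R -> R) : R -> R -> R :=
  fun x1 x2 => Derive_n (fun t => g t x2) k x1 ^ 2.

Section Two_dimensional_estimate.

Lemma RInt_lincomb3 (u1 u2 u3 : R -> R) A1 A2 A3 a b : cont u1 -> cont u2 -> cont u3 ->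
  RInt (fun x => A1 * u1 x + A2 * u2 x + A3 * u3 x) a b =
  A1 * RInt u1 a b + A2 * RInt u2 a b + A3 * RInt u3 a b.
Proof.
  intros H1 H2 H3.
  rewrite !RInt_plus_R, !RInt_scal_R; try apply ex_RInt_cont; auto using cont_scal, cont_plus.
Qed.

Lemma cont2_dx1_sq m k g : smooth_x1 m g -> (k <= m)%nat -> cont2 (dx1_sq k g).
Proof. intros [_ Hc] Hk. apply cont2_sq, Hc, Hk. Qed.

Lemma RInt2_sq_near0_le (g : R -> R -> R) N L r d c0 c1 :
  smooth_x1 (S (S N)) g -> (forall x2, c0 <= x2 <= c1 -> g 0 x2 = 0) ->
  c0 <= c1 -> 0 < r -> r <= L -> 0 <= d -> d <= r / INR (S N) ->
  RInt2 (dx1_sq 0 g) 0 d c0 c1 <=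
  d ^ 3 / 3 * (2592 * 4 ^ N / r ^ 3) * RInt2 (dx1_sq 0 g) 0 r c0 c1 +
  d ^ 3 / 3 * (2 * 4 ^ S N * r ^ (2 * N) / INR (Factorial.fact (S N)) ^ 2) *
   (2 / L * RInt2 (dx1_sq (S N) g) 0 L c0 c1 + 2 * L * RInt2 (dx1_sq (S (S N)) g) 0 L c0 c1).
Proof.
  intros Hg H0 Hc01 Hr HrL Hd0 Hdr.
  set (cf := 2 * 4 ^ S N * r ^ (2 * N) / INR (Factorial.fact (S N)) ^ 2).
  assert (HI : forall k a b, (k <= S (S N))%nat ->
                 cont (fun x2 => RInt (fun x1 => dx1_sq k g x1 x2) a b))
    by (intros; apply RInt_param_continuous_swap, (cont2_dx1_sq _ _ _ Hg); auto).
  unfold RInt2.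
  rewrite (RInt_Fubini (dx1_sq 0 g) 0 d), (RInt_Fubini (dx1_sq 0 g) 0 r),
    (RInt_Fubini (dx1_sq (S N) g) 0 L), (RInt_Fubini (dx1_sq (S (S N)) g) 0 L)
    by (apply (cont2_dx1_sq _ _ _ Hg); lia).
  replace (d ^ 3 / 3 * (2592 * 4 ^ N / r ^ 3) * RInt (fun y => RInt (fun x => dx1_sq 0 g x y) 0 r) c0 c1 +
    d ^ 3 / 3 * cf * (2 / L * RInt (fun y => RInt (fun x => dx1_sq (S N) g x y) 0 L) c0 c1 +
                      2 * L * RInt (fun y => RInt (fun x => dx1_sq (S (S N)) g x y) 0 L) c0 c1))
    with (RInt (fun y => d ^ 3 / 3 * (2592 * 4 ^ N / r ^ 3) * RInt (fun x => dx1_sq 0 g x y) 0 r +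
                         d ^ 3 / 3 * cf * (2 / L) * RInt (fun x => dx1_sq (S N) g x y) 0 L +
                         d ^ 3 / 3 * cf * (2 * L) * RInt (fun x => dx1_sq (S (S N)) g x y) 0 L) c0 c1)
    by (rewrite RInt_lincomb3 by (apply HI; lia);
        match goal with |- ?A = ?B => change (@eq R A B) end; ring).
  apply RInt_le_cont; auto.
  - apply HI; lia.
  - apply cont_plus; [apply cont_plus|]; apply cont_scal, HI; lia.
  - intros x2 Hx2. destruct Hg as [Hd Hc]. eapply Rle_trans.
    + apply (RInt_sq_near0_taylor_le (fun t => g t x2) N L r d); auto.
      intros k Hk. apply (cont2_slice1 _ (Hc k Hk)).
    + right. fold cf. unfold dx1_sq. cbn [Derive_n].
      match goal with |- ?A = ?B => change (@eq R A B) end; field; lra.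
Qed.

Lemma unit_circle_dist_bounds a b c s : c ^ 2 + s ^ 2 = 1 ->
  a ^ 2 + b ^ 2 <= 2 * ((a - c) ^ 2 + (b - s) ^ 2) + 2 /\
  1 / 2 - (a ^ 2 + b ^ 2) <= (a - c) ^ 2 + (b - s) ^ 2.
Proof.
  intros H. split.
  - assert (A1 := pow2_ge_0 (a - 2 * c)). assert (A2 := pow2_ge_0 (b - 2 * s)). nra.
  - assert (A1 := pow2_ge_0 (2 * a - c)). assert (A2 := pow2_ge_0 (2 * b - s)). nra.
Qed.

Lemma RInt2_complement_lower_bound G H d L c0 c1 : cont2 G -> cont2 H ->
  (forall x y, 1 / 2 - G x y <= H x y) -> (forall x y, 0 <= H x y) ->
  0 <= d <= L -> c0 <= c1 ->
  d * (c1 - c0) / 2 - RInt2 G 0 d c0 c1 <= RInt2 H 0 L c0 c1.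
Proof.
  intros HG HH Hle Hnn Hd Hc.
  apply Rle_trans with (RInt2 H 0 d c0 c1); [|apply RInt2_le_subinterval; auto; lra].
  apply Rle_trans with (RInt2 (fun x y => (-1) * G x y + 1 / 2) 0 d c0 c1).
  - rewrite RInt2_affine by exact HG. lra.
  - apply RInt2_le; auto; try lra.
    apply cont2_plus; [apply cont2_mult; [apply cont2_const|exact HG]|apply cont2_const].
    intros x y _ _. specialize (Hle x y). lra.
Qed.

Lemma RInt2_le_twice_plus G H r L c0 c1 : cont2 G -> cont2 H ->
  (forall x y, G x y <= 2 * H x y + 2) -> (forall x y, 0 <= H x y) ->
  0 <= r <= L -> c0 <= c1 ->
  RInt2 G 0 r c0 c1 <= 2 * RInt2 H 0 L c0 c1 + 2 * r * (c1 - c0).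
Proof.
  intros HG HH Hle Hnn Hr Hc.
  apply Rle_trans with (RInt2 (fun x y => 2 * H x y + 2) 0 r c0 c1).
  - apply RInt2_le; auto; try lra.
    apply cont2_plus; [apply cont2_mult; [apply cont2_const|exact HH]|apply cont2_const].
  - rewrite RInt2_affine by exact HH.
    assert (RInt2 H 0 r c0 c1 <= RInt2 H 0 L c0 c1) by (apply RInt2_le_subinterval; auto; lra).
    lra.
Qed.

(* With [d = k r], the mass of [|F|^2] on [0, d] is at most [k r L / 8] plus a multiple
   [27 k / 512] of the mass on [0, r], which itself is controlled by the distance. *)
Lemma distance_lower_bound_of_estimates (D W U X k r L F : R) (N : nat) :
  0 < k -> k <= 1 / 128 -> 0 < r -> 0 < L -> 0 < F ->
  4 ^ S N * k ^ 2 = 1 / 4096 ->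
  W <= (k * r) ^ 3 / 3 * (2592 * 4 ^ N / r ^ 3) * U +
       (k * r) ^ 3 / 3 * (2 * 4 ^ S N * r ^ (2 * N) / F ^ 2) * X ->
  k * r * L / 2 - W <= D ->
  U <= 2 * D + 2 * r * L ->
  r ^ (2 * S N) * X <= 768 * L * F ^ 2 ->
  k * r * L / 4 <= D.
Proof.
  intros Hk Hk1 Hr HL HF H4 HW HD HU HX.
  assert (Hr2 : r ^ (2 * S N) = r ^ (2 * N) * r ^ 2).
  { replace (2 * S N)%nat with (2 * N + 2)%nat by lia. apply pow_add. }
  assert (Hrp : 0 < r ^ (2 * N)) by (apply pow_lt; lra).
  assert (T1 : (k * r) ^ 3 / 3 * (2592 * 4 ^ N / r ^ 3) * U = 27 * k / 512 * U).
  { assert (4 ^ N * k ^ 2 = 1 / 16384) by (simpl in H4; lra).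
    replace ((k * r) ^ 3 / 3 * (2592 * 4 ^ N / r ^ 3) * U) with (864 * k * U * (4 ^ N * k ^ 2))
      by (field; lra).
    rewrite H. field. }
  assert (T2 : (k * r) ^ 3 / 3 * (2 * 4 ^ S N * r ^ (2 * N) / F ^ 2) * X =
               k * r * (r ^ (2 * S N) * X) / (6144 * F ^ 2)).
  { rewrite Hr2.
    replace ((k * r) ^ 3 / 3 * (2 * 4 ^ S N * r ^ (2 * N) / F ^ 2) * X) with
      (2 / 3 * (4 ^ S N * k ^ 2) * k * r ^ 3 * r ^ (2 * N) * X / F ^ 2) by (field; lra).
    rewrite H4. field. lra. }
  assert (T2b : k * r * (r ^ (2 * S N) * X) / (6144 * F ^ 2) <= k * r * L / 8).
  { apply Rle_trans with (k * r * (768 * L * F ^ 2) / (6144 * F ^ 2)); [|right; field; lra].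
    unfold Rdiv. apply Rmult_le_compat_r; [left; apply Rinv_0_lt_compat; nra|].
    apply Rmult_le_compat_l; nra. }
  rewrite T1, T2 in HW.
  assert (27 * k / 512 * U <= 27 * k / 512 * (2 * D + 2 * r * L)) by (apply Rmult_le_compat_l; lra).
  assert (Hkr : 0 < k * r * L) by (repeat apply Rmult_lt_0_compat; auto).
  assert (D * (1 + 27 * k / 256) >= 69 / 256 * (k * r * L)) by nra.
  nra.
Qed.

Lemma near0_scale_facts N :
  0 < / (64 * 2 ^ S N) /\ / (64 * 2 ^ S N) <= 1 / 128 /\
  / (64 * 2 ^ S N) * INR (S N) <= 1 /\ 4 ^ S N * (/ (64 * 2 ^ S N)) ^ 2 = 1 / 4096.
Proof.
  assert (H2p : 2 <= 2 ^ S N) by (simpl; assert (1 <= 2 ^ N) by (apply pow_R1_Rle; lra); lra).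
  assert (HpN : INR (S N) <= 2 ^ S N).
  { clear H2p. induction (S N) as [|n IH]; [simpl; lra|].
    rewrite S_INR. simpl. assert (1 <= 2 ^ n) by (apply pow_R1_Rle; lra). lra. }
  split; [apply Rinv_0_lt_compat; lra|split; [|split]].
  - apply Rle_trans with (/ 128); [apply Rinv_le_contravar|]; lra.
  - apply Rmult_le_reg_l with (64 * 2 ^ S N); [lra|].
    rewrite <- Rmult_assoc, Rinv_r by lra. lra.
  - replace (4 ^ S N) with (2 ^ S N * 2 ^ S N) by (rewrite <- Rpow_mult_distr; f_equal; ring).
    field. lra.
Qed.

Lemma RInt2_distance_lower_bound (gr gi cs sn : R -> R -> R) (N : nat) (L r : R) :
  smooth_x1 (S (S N)) gr -> smooth_x1 (S (S N)) gi ->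
  (forall x2, - (L / 2) <= x2 <= L / 2 -> gr 0 x2 = 0) ->
  (forall x2, - (L / 2) <= x2 <= L / 2 -> gi 0 x2 = 0) ->
  cont2 cs -> cont2 sn -> (forall x y, cs x y ^ 2 + sn x y ^ 2 = 1) ->
  0 < r -> r <= L ->
  r ^ (2 * S N) *
    (2 / L * (RInt2 (dx1_sq (S N) gr) 0 L (- (L / 2)) (L / 2) +
              RInt2 (dx1_sq (S N) gi) 0 L (- (L / 2)) (L / 2)) +
     2 * L * (RInt2 (dx1_sq (S (S N)) gr) 0 L (- (L / 2)) (L / 2) +
              RInt2 (dx1_sq (S (S N)) gi) 0 L (- (L / 2)) (L / 2)))
   <= 768 * L * INR (Factorial.fact (S N)) ^ 2 ->
  / (64 * 2 ^ S N) * r * L / 4 <=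
  RInt2 (fun x1 x2 => (gr x1 x2 - cs x1 x2) ^ 2 + (gi x1 x2 - sn x1 x2) ^ 2) 0 L (- (L / 2)) (L / 2).
Proof.
  intros Hgr Hgi H0r H0i Hcs Hsn Hunit Hr HrL HX.
  set (c0 := - (L / 2)) in *. set (c1 := L / 2) in *.
  assert (Hc01 : c0 <= c1) by (unfold c0, c1; lra).
  assert (Hlen : c1 - c0 = L) by (unfold c0, c1; lra).
  set (k := / (64 * 2 ^ S N)).
  destruct (near0_scale_facts N) as (Hk & Hk1 & HkN & H4). fold k in Hk, Hk1, HkN, H4.
  assert (Hp1 : 1 <= INR (S N)) by (apply (le_INR 1); lia).
  set (d := k * r).
  assert (Hdr : d <= r / INR (S N)).
  { unfold d, Rdiv. rewrite Rmult_comm. apply Rmult_le_compat_l; [lra|].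
    apply Rmult_le_reg_r with (INR (S N)); [lra|]. rewrite Rinv_l; lra. }
  assert (HdL : d <= L).
  { apply Rle_trans with r; auto. unfold d. rewrite <- (Rmult_1_l r) at 2.
    apply Rmult_le_compat_r; lra. }
  assert (Hd0 : 0 < d) by (unfold d; apply Rmult_lt_0_compat; auto).
  assert (Jr : cont2 gr) by exact (proj2 Hgr 0%nat ltac:(lia)).
  assert (Ji : cont2 gi) by exact (proj2 Hgi 0%nat ltac:(lia)).
  set (Gf := fun x1 x2 => gr x1 x2 ^ 2 + gi x1 x2 ^ 2).
  set (Gfe := fun x1 x2 => (gr x1 x2 - cs x1 x2) ^ 2 + (gi x1 x2 - sn x1 x2) ^ 2).
  assert (JGf : cont2 Gf) by (apply cont2_plus; apply cont2_sq; auto).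
  assert (JGfe : cont2 Gfe) by (apply cont2_plus; apply cont2_sq, cont2_minus; auto).
  assert (HGfe : forall x y, 0 <= Gfe x y).
  { intros; unfold Gfe. generalize (pow2_ge_0 (gr x y - cs x y)) (pow2_ge_0 (gi x y - sn x y)). lra. }
  assert (HGf : forall a, RInt2 Gf 0 a c0 c1 = RInt2 (dx1_sq 0 gr) 0 a c0 c1 + RInt2 (dx1_sq 0 gi) 0 a c0 c1)
    by (intros; apply RInt2_plus; apply cont2_sq; auto).
  set (F := INR (Factorial.fact (S N))).
  assert (HF : 0 < F) by (apply lt_0_INR, Factorial.lt_O_fact).
  assert (HW : RInt2 Gf 0 d c0 c1 <=
     d ^ 3 / 3 * (2592 * 4 ^ N / r ^ 3) * RInt2 Gf 0 r c0 c1 +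
     d ^ 3 / 3 * (2 * 4 ^ S N * r ^ (2 * N) / F ^ 2) *
      (2 / L * (RInt2 (dx1_sq (S N) gr) 0 L c0 c1 + RInt2 (dx1_sq (S N) gi) 0 L c0 c1) +
       2 * L * (RInt2 (dx1_sq (S (S N)) gr) 0 L c0 c1 + RInt2 (dx1_sq (S (S N)) gi) 0 L c0 c1))).
  { rewrite !HGf. eapply Rle_trans.
    - apply Rplus_le_compat; [apply (RInt2_sq_near0_le gr N L r d)|apply (RInt2_sq_near0_le gi N L r d)];
        auto; lra.
    - right. unfold F. match goal with |- ?A = ?B => change (@eq R A B) end. ring. }
  assert (HD : d * (c1 - c0) / 2 - RInt2 Gf 0 d c0 c1 <= RInt2 Gfe 0 L c0 c1).
  { apply RInt2_complement_lower_bound; auto; [|lra].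
    intros x y. apply unit_circle_dist_bounds, Hunit. }
  assert (HU : RInt2 Gf 0 r c0 c1 <= 2 * RInt2 Gfe 0 L c0 c1 + 2 * r * (c1 - c0)).
  { apply RInt2_le_twice_plus; auto; [|lra].
    intros x y. apply unit_circle_dist_bounds, Hunit. }
  rewrite Hlen in HD, HU.
  exact (distance_lower_bound_of_estimates _ _ _ _ k r L F N Hk Hk1 Hr ltac:(lra) HF H4 HW HD HU HX).
Qed.

End Two_dimensional_estimate.

Section Regularity.

Lemma Derive_n_pderiv (g : R -> R -> R) k x1 x2 :
  Derive_n (fun t => g t x2) k x1 = pderiv (repeat true k) g x1 x2.
Proof. revert x1. induction k; intros x1; simpl; auto. apply Derive_ext. intros t. apply IHk. Qed.

Lemma Ck_R2_smooth_x1 m (g : R -> R -> R) : Ck_R2 m g -> smooth_x1 m g.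
Proof.
  intros [H1 H2]. split.
  - intros [|k] x2 x Hk; simpl; auto.
    apply ex_derive_ext with (fun t => pderiv (repeat true k) g t x2);
      [intros; symmetry; apply Derive_n_pderiv|].
    apply (proj1 (H1 (repeat true k) ltac:(rewrite repeat_length; lia) x x2)).
  - intros k Hk z.
    apply continuous_ext with (fun w : R * R => pderiv (repeat true k) g (fst w) (snd w));
      [intros; symmetry; apply Derive_n_pderiv|].
    apply H2. rewrite repeat_length; lia.
Qed.

End Regularity.

Section Rectangle_norms.

Lemma L2sq_rect_dist_expi a b c d (f F : R -> R -> C) xi1 xi2 phi :
  a <= b -> c <= d -> (forall x1 x2, in_rect a b c d x1 x2 -> F x1 x2 = f x1 x2) ->
  L2sq_rect a b c d (fun x1 x2 => Cminus (f x1 x2) (expi (xi1 * x1 + xi2 * x2 + phi))) =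
  RInt2 (fun x1 x2 => (Re (F x1 x2) - cos (xi1 * x1 + xi2 * x2 + phi)) ^ 2 +
                      (Im (F x1 x2) - sin (xi1 * x1 + xi2 * x2 + phi)) ^ 2) a b c d.
Proof.
  intros Hab Hcd HFf. unfold L2sq_rect, RInt2.
  apply (RInt_ext (V := R_CompleteNormedModule)). intros x1 Hx1.
  rewrite Rmin_left, Rmax_right in Hx1 by lra.
  apply (RInt_ext (V := R_CompleteNormedModule)). intros x2 Hx2.
  rewrite Rmin_left, Rmax_right in Hx2 by lra.
  rewrite <- HFf by (split; lra).
  unfold Cmod, Cminus, Cplus, Copp, expi, Re, Im. simpl fst; simpl snd.
  rewrite pow2_sqrt; [match goal with |- ?A = ?B => change (@eq R A B) end; ring|].
  generalize (pow2_ge_0 (fst (F x1 x2) + - cos (xi1 * x1 + xi2 * x2 + phi)))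
             (pow2_ge_0 (snd (F x1 x2) + - sin (xi1 * x1 + xi2 * x2 + phi))). lra.
Qed.

Lemma L2sq_rect_dx1_n a b c d k (F : R -> R -> C) :
  cont2 (dx1_sq k (fun x1 x2 => Re (F x1 x2))) -> cont2 (dx1_sq k (fun x1 x2 => Im (F x1 x2))) ->
  L2sq_rect a b c d (dx1_n k F) =
  RInt2 (dx1_sq k (fun x1 x2 => Re (F x1 x2))) a b c d +
  RInt2 (dx1_sq k (fun x1 x2 => Im (F x1 x2))) a b c d.
Proof.
  intros Hr Hi. rewrite <- RInt2_plus by auto.
  unfold L2sq_rect, RInt2. apply RInt_ext_R. intros x1. apply RInt_ext_R. intros x2.
  unfold Cmod, dx1_n, dx1_sq. simpl fst; simpl snd. rewrite pow2_sqrt; auto.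
  generalize (pow2_ge_0 (Derive_n (fun t => Re (F t x2)) k x1))
             (pow2_ge_0 (Derive_n (fun t => Im (F t x2)) k x1)). lra.
Qed.

Lemma sq_le_of_sqrt_le_Rpower x beta lam e m : 0 <= x -> 0 < lam -> 2 * e = INR m ->
  sqrt x <= beta * Rpower lam e -> x <= beta ^ 2 * lam ^ m.
Proof.
  intros Hx Hlam Hm H. rewrite <- (pow2_sqrt x) by auto.
  rewrite <- (Rpower_pow m lam Hlam), <- Hm.
  replace (Rpower lam (2 * e)) with (Rpower lam e ^ 2)
    by (unfold Rpower; simpl; rewrite Rmult_1_r, <- exp_plus; f_equal; ring).
  rewrite <- Rpow_mult_distr. apply pow_incr. split; auto. apply sqrt_pos.
Qed.

End Rectangle_norms.

Section Constants.

Lemma pow_Rpower_inv x n : 0 < x -> (0 < n)%nat -> Rpower x (1 / INR n) ^ n = x.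
Proof.
  intros Hx Hn. rewrite <- Rpower_pow by (unfold Rpower; apply exp_pos).
  rewrite Rpower_mult. replace (1 / INR n * INR n) with 1; [apply Rpower_1, Hx|].
  field. apply not_0_INR. lia.
Qed.

(* The scale [r] is chosen so that [r^(2(N+1))] times the derivative energies is [O(L)]. *)
Lemma energy_scale_condition (lam L bp bp1 E1 E2 F r : R) (N : nat) :
  0 < lam -> 0 < L -> L ^ 2 * lam = 1 / 4 -> 0 <= E1 -> 0 <= E2 -> 0 < bp -> 0 < bp1 -> 0 < F ->
  E1 <= bp ^ 2 * lam ^ S (S N) -> E2 <= bp1 ^ 2 * lam ^ S (S (S N)) -> 0 <= r ->
  r <= Rpower (96 * F ^ 2 / (lam ^ S (S (S N)) * (bp1 ^ 2 + bp ^ 2))) (1 / (2 * INR (S N))) ->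
  r ^ (2 * S N) * (2 / L * E1 + 2 * L * E2) <= 768 * L * F ^ 2.
Proof.
  intros Hlam HL HL2 HE1 HE2 Hbp Hbp1 HF H1 H2 Hr Hrho.
  set (B2 := bp1 ^ 2 + bp ^ 2) in *.
  assert (HB2 : 0 < B2) by (unfold B2; generalize (pow_lt bp 2 Hbp) (pow_lt bp1 2 Hbp1); lra).
  assert (HG : 0 < lam ^ S (S N)) by (apply pow_lt; auto).
  set (X := 96 * F ^ 2 / (lam ^ S (S (S N)) * B2)) in *.
  assert (HX : 0 < X).
  { unfold X. apply Rdiv_lt_0_compat; [nra|]. apply Rmult_lt_0_compat; auto. apply pow_lt; auto. }
  assert (Hr2p : r ^ (2 * S N) <= X).
  { rewrite <- (pow_Rpower_inv X (2 * S N)) by (auto; lia).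
    apply pow_incr. rewrite mult_INR. auto. }
  assert (HY : 2 / L * E1 + 2 * L * E2 <= 2 / L * lam ^ S (S N) * B2).
  { assert (E : 2 * L * (bp1 ^ 2 * lam ^ S (S (S N))) =
                2 / L * lam ^ S (S N) * (bp1 ^ 2 * (L ^ 2 * lam))) by (simpl pow; field; lra).
    rewrite HL2 in E.
    assert (2 / L * E1 <= 2 / L * (bp ^ 2 * lam ^ S (S N)))
      by (apply Rmult_le_compat_l; auto; apply Rdiv_le_0_compat; lra).
    assert (2 * L * E2 <= 2 * L * (bp1 ^ 2 * lam ^ S (S (S N)))) by (apply Rmult_le_compat_l; lra).
    assert (0 < 2 / L * lam ^ S (S N)) by (apply Rmult_lt_0_compat; auto; apply Rdiv_lt_0_compat; lra).
    assert (0 <= bp1 ^ 2) by apply pow2_ge_0.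
    unfold B2. nra. }
  apply Rle_trans with (X * (2 / L * lam ^ S (S N) * B2)).
  - apply Rmult_le_compat; auto; [apply pow_le; auto|].
    assert (0 <= 2 / L * E1) by (apply Rmult_le_pos; auto; apply Rdiv_le_0_compat; lra).
    assert (0 <= 2 * L * E2) by (apply Rmult_le_pos; auto; lra). lra.
  - right. unfold X. assert (Hlam4 : lam = / (4 * L ^ 2)) by (field_simplify_eq; lra).
    change (lam ^ S (S (S N))) with (lam * lam ^ S (S N)).
    set (G := lam ^ S (S N)) in *. rewrite Hlam4. field. repeat split; lra.
Qed.

Lemma ln_le_inv a b : 0 < a -> 0 < b -> ln a <= ln b -> a <= b.
Proof.
  intros Ha Hb H. destruct (Rle_lt_dec a b); auto.
  assert (ln b < ln a) by (apply ln_increasing; auto). lra.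
Qed.

Lemma pow16_le_fact p : (1 <= p)%nat -> 16 ^ p <= 4 * 9 ^ p * INR (Factorial.fact p).
Proof.
  intros Hp. induction Hp.
  - simpl. lra.
  - rewrite fact_simpl, mult_INR. simpl pow.
    assert (H1 : 2 <= INR (S m)) by (apply (le_INR 2); lia).
    assert (0 < INR (Factorial.fact m)) by (apply lt_0_INR, Factorial.lt_O_fact).
    assert (0 <= 9 ^ m) by (apply pow_le; lra).
    assert (0 <= 4 * 9 ^ m * INR (Factorial.fact m)) by (repeat apply Rmult_le_pos; lra).
    nra.
Qed.

Lemma ln_consts : ln 4 = 2 * ln 2 /\ ln 6 = ln 2 + ln 3 /\ ln 36 = 2 * ln 2 + 2 * ln 3 /\
  ln 64 = 6 * ln 2 /\ ln 96 = 5 * ln 2 + ln 3 /\ ln 16 = 4 * ln 2 /\ ln 9 = 2 * ln 3.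
Proof.
  assert (P2 : ln (2 ^ 2) = INR 2 * ln 2) by (apply ln_pow; lra).
  assert (P4 : ln (2 ^ 4) = INR 4 * ln 2) by (apply ln_pow; lra).
  assert (P5 : ln (2 ^ 5) = INR 5 * ln 2) by (apply ln_pow; lra).
  assert (P6 : ln (2 ^ 6) = INR 6 * ln 2) by (apply ln_pow; lra).
  assert (P9 : ln (3 ^ 2) = INR 2 * ln 3) by (apply ln_pow; lra).
  assert (M6 : ln (2 * 3) = ln 2 + ln 3) by (apply ln_mult; lra).
  assert (M36 : ln (6 * 6) = ln 6 + ln 6) by (apply ln_mult; lra).
  assert (M96 : ln (32 * 3) = ln 32 + ln 3) by (apply ln_mult; lra).
  simpl INR in *.
  replace (2 ^ 2) with 4 in P2 by ring. replace (2 ^ 4) with 16 in P4 by ring.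
  replace (2 ^ 5) with 32 in P5 by ring. replace (2 ^ 6) with 64 in P6 by ring.
  replace (3 ^ 2) with 9 in P9 by ring. replace (2 * 3) with 6 in M6 by ring.
  replace (6 * 6) with 36 in M36 by ring. replace (32 * 3) with 96 in M96 by ring.
  repeat split; lra.
Qed.

Lemma ln_pow16_le_fact p : (1 <= p)%nat ->
  4 * INR p * ln 2 <= 2 * ln 2 + 2 * INR p * ln 3 + ln (INR (Factorial.fact p)).
Proof.
  intros Hp. destruct ln_consts as (l4 & _ & _ & _ & _ & l16 & l9).
  assert (HF : 0 < INR (Factorial.fact p)) by (apply lt_0_INR, Factorial.lt_O_fact).
  assert (H9p : 0 < 9 ^ p) by (apply pow_lt; lra).
  assert (Hln : ln (16 ^ p) <= ln (4 * 9 ^ p * INR (Factorial.fact p))).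
  { destruct (Rle_lt_or_eq_dec _ _ (pow16_le_fact p Hp)) as [Hlt|Heq]; [|rewrite Heq; lra].
    left. apply ln_increasing; auto. apply pow_lt; lra. }
  rewrite ln_mult, ln_mult, ln_pow, ln_pow, l16, l9, l4 in Hln by lra. lra.
Qed.

Lemma ln_energy_ratio lam B2 p : 0 < lam -> 0 < B2 ->
  ln (96 * INR (Factorial.fact p) ^ 2 / (lam ^ S (S p) * B2)) =
  5 * ln 2 + ln 3 + 2 * ln (INR (Factorial.fact p)) - ((INR p + 2) * ln lam + ln B2).
Proof.
  intros Hl HB. destruct ln_consts as (_ & _ & _ & _ & l96 & _ & _).
  assert (HF : 0 < INR (Factorial.fact p)) by (apply lt_0_INR, Factorial.lt_O_fact).
  assert (0 < INR (Factorial.fact p) ^ 2) by (apply pow_lt; auto).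
  assert (0 < lam ^ S (S p)) by (apply pow_lt; auto).
  assert (0 < lam ^ S (S p) * B2) by (apply Rmult_lt_0_compat; auto).
  unfold Rdiv. rewrite ln_mult, ln_mult, ln_Rinv, ln_mult, ln_pow, ln_pow, l96, !S_INR;
    auto; try lra; try (apply Rinv_0_lt_compat; auto).
  simpl INR. ring.
Qed.

Lemma small_scale_constant_le (lam : R) (p : nat) : 0 < lam -> (1 <= p)%nat ->
  1 / 36 * (Rpower 4 (- INR p - 5 / 2) * / lam) <=
  / (64 * 2 ^ p) * (1 / (2 * sqrt lam)) * (1 / (2 * sqrt lam)) / 4.
Proof.
  intros Hl Hp.
  assert (Hs : 0 < sqrt lam) by (apply sqrt_lt_R0; auto).
  assert (H2p : 0 < 2 ^ p) by (apply pow_lt; lra).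
  assert (HR : 0 < Rpower 4 (- INR p - 5 / 2)) by (unfold Rpower; apply exp_pos).
  apply ln_le_inv.
  - apply Rmult_lt_0_compat; [lra|]. apply Rmult_lt_0_compat; auto. apply Rinv_0_lt_compat; auto.
  - unfold Rdiv. repeat apply Rmult_lt_0_compat; try lra; apply Rinv_0_lt_compat; try lra.
  - destruct ln_consts as (l4 & _ & l36 & l64 & _ & _ & _).
    assert (Hsq : ln (sqrt lam) = / 2 * ln lam) by (rewrite <- Rpower_sqrt by auto; apply ln_Rpower).
    assert (Hp2 : ln (2 ^ p) = INR p * ln 2) by (apply ln_pow; lra).
    replace (1 / 36 * (Rpower 4 (- INR p - 5 / 2) * / lam))
      with (/ 36 * Rpower 4 (- INR p - 5 / 2) * / lam) by (field; lra).
    replace (/ (64 * 2 ^ p) * (1 / (2 * sqrt lam)) * (1 / (2 * sqrt lam)) / 4)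
      with (/ 64 * / 2 ^ p * / 2 * / sqrt lam * / 2 * / sqrt lam * / 4) by (field; lra).
    rewrite !ln_mult; try (apply Rinv_0_lt_compat; lra); try lra;
      repeat (apply Rmult_lt_0_compat; try (apply Rinv_0_lt_compat; lra)); try lra.
    rewrite !ln_Rinv by lra. rewrite ln_Rpower, Hsq, Hp2, l4, l36, l64.
    assert (L2 : 0 < ln 2) by (rewrite <- ln_1; apply ln_increasing; lra).
    assert (L23 : ln 2 < ln 3) by (apply ln_increasing; lra).
    assert (HP : 1 <= INR p) by (apply (le_INR 1); auto).
    assert (0 <= (INR p - 1) * ln 2) by (apply Rmult_le_pos; lra).
    lra.
Qed.

(* After taking logarithms this is [(16/9)^p <= 4 p!]. *)
Lemma large_scale_constant_le (lam B2 : R) (p : nat) : 0 < lam -> 0 < B2 -> (1 <= p)%nat ->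
  1 / 36 * (Rpower 4 (- (INR p / 2) - 3 / 2) * Rpower 6 (1 / (2 * INR p)) *
            Rpower B2 (- (1 / (2 * INR p))) * Rpower lam (-1 - 1 / INR p)) <=
  / (64 * 2 ^ p) * Rpower (96 * INR (Factorial.fact p) ^ 2 / (lam ^ S (S p) * B2)) (1 / (2 * INR p))
    * (1 / (2 * sqrt lam)) / 4.
Proof.
  intros Hl HB Hp.
  assert (Hs : 0 < sqrt lam) by (apply sqrt_lt_R0; auto).
  assert (H2p : 0 < 2 ^ p) by (apply pow_lt; lra).
  assert (HF : 0 < INR (Factorial.fact p)) by (apply lt_0_INR, Factorial.lt_O_fact).
  assert (HP : 1 <= INR p) by (apply (le_INR 1); auto).
  assert (HlS : 0 < lam ^ S (S p)) by (apply pow_lt; auto).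
  set (X := 96 * INR (Factorial.fact p) ^ 2 / (lam ^ S (S p) * B2)).
  assert (HX : 0 < X).
  { unfold X. apply Rdiv_lt_0_compat. apply Rmult_lt_0_compat; [lra|apply pow_lt; auto].
    apply Rmult_lt_0_compat; auto. }
  assert (Pos : forall a y, 0 < Rpower a y) by (intros; unfold Rpower; apply exp_pos).
  apply ln_le_inv.
  - repeat apply Rmult_lt_0_compat; auto; lra.
  - unfold Rdiv. repeat apply Rmult_lt_0_compat; auto; try lra; apply Rinv_0_lt_compat; lra.
  - destruct ln_consts as (l4 & l6 & l36 & l64 & _ & _ & _).
    assert (Hsq : ln (sqrt lam) = / 2 * ln lam) by (rewrite <- Rpower_sqrt by auto; apply ln_Rpower).
    assert (Hp2 : ln (2 ^ p) = INR p * ln 2) by (apply ln_pow; lra).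
    assert (HlnX := ln_energy_ratio lam B2 p Hl HB).
    replace (1 / 36 * (Rpower 4 (- (INR p / 2) - 3 / 2) * Rpower 6 (1 / (2 * INR p)) *
            Rpower B2 (- (1 / (2 * INR p))) * Rpower lam (-1 - 1 / INR p)))
      with (/ 36 * Rpower 4 (- (INR p / 2) - 3 / 2) * Rpower 6 (1 / (2 * INR p)) *
            Rpower B2 (- (1 / (2 * INR p))) * Rpower lam (-1 - 1 / INR p)) by (field; lra).
    replace (/ (64 * 2 ^ p) * Rpower X (1 / (2 * INR p)) * (1 / (2 * sqrt lam)) / 4)
      with (/ 64 * / 2 ^ p * Rpower X (1 / (2 * INR p)) * / 2 * / sqrt lam * / 4) by (field; lra).
    rewrite !ln_mult; try (apply Rinv_0_lt_compat; lra); auto; try lra;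
      repeat (apply Rmult_lt_0_compat; auto; try (apply Rinv_0_lt_compat; lra)); try lra.
    rewrite !ln_Rinv by lra. unfold X. rewrite !ln_Rpower, Hsq, Hp2, HlnX.
    rewrite l4, l6, l36, l64.
    assert (Hln := ln_pow16_le_fact p Hp).
    set (l2 := ln 2) in *. set (l3 := ln 3) in *. set (lF := ln (INR (Factorial.fact p))) in *.
    set (lL := ln lam) in *. set (lB := ln B2) in *. set (q := INR p) in *.
    assert (Hq : 0 < q) by lra.
    match goal with |- ?A <= ?B => assert (E : B - A = (q * (2 * l3 - 4 * l2) + 2 * l2 + lF) / q) end.
    { field. lra. }
    assert (Hnum : 0 <= q * (2 * l3 - 4 * l2) + 2 * l2 + lF) by lra.
    assert (0 <= (q * (2 * l3 - 4 * l2) + 2 * l2 + lF) / q) by (apply Rdiv_le_0_compat; lra).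
    lra.
Qed.

End Constants.

Lemma constant_le_scale_min (lam B2 F : R) (N : nat) : 0 < lam -> 0 < B2 ->
  F = INR (Factorial.fact (S N)) ->
  1 / 36 *
    Rmin (Rpower 4 (- INR (S N) - 5 / 2) * / lam)
         (Rpower 4 (- (INR (S N) / 2) - 3 / 2) * Rpower 6 (1 / (2 * INR (S N)))
          * Rpower B2 (- (1 / (2 * INR (S N)))) * Rpower lam (-1 - 1 / INR (S N)))
  <= / (64 * 2 ^ S N) *
     Rmin (1 / (2 * sqrt lam))
          (Rpower (96 * F ^ 2 / (lam ^ S (S (S N)) * B2)) (1 / (2 * INR (S N))))
     * (1 / (2 * sqrt lam)) / 4.
Proof.
  intros Hlam HB2 ->.
  set (rho := Rpower (96 * INR (Factorial.fact (S N)) ^ 2 / (lam ^ S (S (S N)) * B2))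
                     (1 / (2 * INR (S N)))).
  destruct (Rle_dec (1 / (2 * sqrt lam)) rho) as [H|H];
    [rewrite (Rmin_left _ rho H)|rewrite (Rmin_right _ rho) by lra].
  - eapply Rle_trans; [apply Rmult_le_compat_l; [lra|apply Rmin_l]|].
    apply small_scale_constant_le; auto; lia.
  - eapply Rle_trans; [apply Rmult_le_compat_l; [lra|apply Rmin_r]|].
    apply large_scale_constant_le; auto; lia.
Qed.

Lemma RInt2_dx1_sq_nonneg m k g a b c d : smooth_x1 m g -> (k <= m)%nat -> a <= b -> c <= d ->
  0 <= RInt2 (dx1_sq k g) a b c d.
Proof.
  intros Hg Hk Hab Hcd. apply RInt2_nonneg; auto.
  - apply (cont2_dx1_sq m); auto.
  - intros; apply pow2_ge_0.
Qed.

Lemma plane_wave_distance_lower_bound (lam L bp bp1 xi1 xi2 phi : R) (N : nat) (gr gi : R -> R -> R) :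
  0 < lam -> L = 1 / (2 * sqrt lam) -> 0 < bp -> 0 < bp1 ->
  smooth_x1 (S (S N)) gr -> smooth_x1 (S (S N)) gi ->
  (forall x2, - (L / 2) <= x2 <= L / 2 -> gr 0 x2 = 0) ->
  (forall x2, - (L / 2) <= x2 <= L / 2 -> gi 0 x2 = 0) ->
  RInt2 (dx1_sq (S N) gr) 0 L (- (L / 2)) (L / 2) + RInt2 (dx1_sq (S N) gi) 0 L (- (L / 2)) (L / 2)
    <= bp ^ 2 * lam ^ S (S N) ->
  RInt2 (dx1_sq (S (S N)) gr) 0 L (- (L / 2)) (L / 2) +
  RInt2 (dx1_sq (S (S N)) gi) 0 L (- (L / 2)) (L / 2) <= bp1 ^ 2 * lam ^ S (S (S N)) ->
  1 / 36 *
    Rmin (Rpower 4 (- INR (S N) - 5 / 2) * / lam)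
         (Rpower 4 (- (INR (S N) / 2) - 3 / 2) * Rpower 6 (1 / (2 * INR (S N)))
          * Rpower (bp1 ^ 2 + bp ^ 2) (- (1 / (2 * INR (S N)))) * Rpower lam (-1 - 1 / INR (S N)))
  <= RInt2 (fun x1 x2 => (gr x1 x2 - cos (xi1 * x1 + xi2 * x2 + phi)) ^ 2 +
                         (gi x1 x2 - sin (xi1 * x1 + xi2 * x2 + phi)) ^ 2) 0 L (- (L / 2)) (L / 2).
Proof.
  intros Hlam HLdef Hbp Hbp1 Hgr Hgi H0r H0i HE1 HE2.
  assert (Hs : 0 < sqrt lam) by (apply sqrt_lt_R0; auto).
  assert (HL : 0 < L) by (rewrite HLdef; apply Rdiv_lt_0_compat; lra).
  assert (HL2 : L ^ 2 * lam = 1 / 4).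
  { rewrite HLdef. unfold Rdiv. rewrite Rpow_mult_distr, pow_inv, Rpow_mult_distr, pow2_sqrt by lra.
    field. lra. }
  assert (HE : forall k, (k <= S (S N))%nat ->
    0 <= RInt2 (dx1_sq k gr) 0 L (- (L / 2)) (L / 2) + RInt2 (dx1_sq k gi) 0 L (- (L / 2)) (L / 2))
    by (intros; apply Rplus_le_le_0_compat; apply (RInt2_dx1_sq_nonneg (S (S N))); auto; lra).
  assert (Hphase : cont2 (fun x1 x2 => xi1 * x1 + xi2 * x2 + phi)).
  { apply cont2_plus; [apply cont2_plus|apply cont2_const];
      apply cont2_mult; try apply cont2_const; [apply cont2_fst|apply cont2_snd]. }
  set (rho := Rpower (96 * INR (Factorial.fact (S N)) ^ 2 / (lam ^ S (S (S N)) * (bp1 ^ 2 + bp ^ 2)))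
                     (1 / (2 * INR (S N)))).
  assert (Hr : 0 < Rmin L rho) by (apply Rmin_glb_lt; [exact HL|apply exp_pos]).
  eapply Rle_trans.
  { apply (constant_le_scale_min lam (bp1 ^ 2 + bp ^ 2) (INR (Factorial.fact (S N))) N); auto.
    generalize (pow_lt _ 2 Hbp) (pow_lt _ 2 Hbp1). lra. }
  rewrite <- HLdef. fold rho.
  apply (RInt2_distance_lower_bound gr gi _ _ N L); auto.
  - apply cont2_cos, Hphase.
  - apply cont2_sin, Hphase.
  - intros x y. rewrite <- (sin2_cos2 (xi1 * x + xi2 * y + phi)). unfold Rsqr. ring.
  - apply Rmin_l.
  - apply (energy_scale_condition lam L bp bp1); auto; try (apply HE; lia); try lra.
    + apply lt_0_INR, Factorial.lt_O_fact.
    + apply Rmin_r.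
Qed.

Theorem proposition4p7 (lam : R) (p : nat) (f F : R -> R -> C)
  (beta_p beta_p1 : R) :
  0 < lam ->
  (1 <= p)%nat ->
  Ck_R2_C (S p) F ->
  (forall x1 x2, in_rect 0 (1 / (2 * sqrt lam)) (- (1 / (4 * sqrt lam)))
                   (1 / (4 * sqrt lam)) x1 x2 -> F x1 x2 = f x1 x2) ->
  (forall x2, - (1 / (4 * sqrt lam)) <= x2 <= 1 / (4 * sqrt lam) ->
     f 0 x2 = 0%C) ->
  0 < beta_p -> 0 < beta_p1 ->
  L2_rect 0 (1 / (2 * sqrt lam)) (- (1 / (4 * sqrt lam))) (1 / (4 * sqrt lam))
    (dx1_n (S p) F) <= beta_p1 * Rpower lam (1 + INR p / 2) ->
  L2_rect 0 (1 / (2 * sqrt lam)) (- (1 / (4 * sqrt lam))) (1 / (4 * sqrt lam))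
    (dx1_n p F) <= beta_p * Rpower lam (1 / 2 + INR p / 2) ->
  forall xi1 xi2 phi : R,
    L2sq_rect 0 (1 / (2 * sqrt lam)) (- (1 / (4 * sqrt lam))) (1 / (4 * sqrt lam))
      (fun x1 x2 => Cminus (f x1 x2) (expi (xi1 * x1 + xi2 * x2 + phi)))
    >= 1 / 36 *
       Rmin (Rpower 4 (- INR p - 5 / 2) * / lam)
            (Rpower 4 (- (INR p / 2) - 3 / 2) * Rpower 6 (1 / (2 * INR p))
             * Rpower (beta_p1 ^ 2 + beta_p ^ 2) (- (1 / (2 * INR p)))
             * Rpower lam (-1 - 1 / INR p)).
Proof.
  intros Hlam Hp [HCr HCi] HFf Hf0 Hbp Hbp1 HI1 HI0 xi1 xi2 phi.
  destruct p as [|N]; [lia|].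
  assert (Hs : 0 < sqrt lam) by (apply sqrt_lt_R0; auto).
  replace (1 / (4 * sqrt lam)) with (1 / (2 * sqrt lam) / 2) in * by (field; lra).
  set (L := 1 / (2 * sqrt lam)) in *.
  assert (HL : 0 < L) by (unfold L; apply Rdiv_lt_0_compat; lra).
  set (gr := fun x1 x2 => Re (F x1 x2)) in *. set (gi := fun x1 x2 => Im (F x1 x2)) in *.
  apply Ck_R2_smooth_x1 in HCr, HCi.
  unfold L2_rect in HI0, HI1.
  rewrite L2sq_rect_dx1_n in HI0, HI1 by (apply (cont2_dx1_sq (S (S N))); auto).
  rewrite (L2sq_rect_dist_expi _ _ _ _ f F) by (auto; lra).
  apply Rle_ge, (plane_wave_distance_lower_bound lam L beta_p beta_p1 xi1 xi2 phi N gr gi); auto.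
  - intros x2 Hx2. unfold gr. rewrite HFf, Hf0 by (try split; lra). reflexivity.
  - intros x2 Hx2. unfold gi. rewrite HFf, Hf0 by (try split; lra). reflexivity.
  - apply (sq_le_of_sqrt_le_Rpower _ beta_p lam (1 / 2 + INR (S N) / 2)); auto.
    + apply Rplus_le_le_0_compat; apply (RInt2_dx1_sq_nonneg (S (S N))); auto; lra.
    + rewrite !S_INR. field.
  - apply (sq_le_of_sqrt_le_Rpower _ beta_p1 lam (1 + INR (S N) / 2)); auto.
    + apply Rplus_le_le_0_compat; apply (RInt2_dx1_sq_nonneg (S (S N))); auto; lra.
    + rewrite !S_INR. field.
Qed.
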